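(* Let $\Gamma_1$ be a represented pointclass, let $\Gamma_2$ be the closure of $\Gamma_1$ under finite unions, rescaling, and union with clopen sets (with the induced representation), and let $\Gamma=\Gamma_2\cup\overline{\Gamma_2}$; assume $\Gamma_1$ and $\Gamma$ satisfy the standing assumptions. Then $\mathrm{FindWS}_{\Gamma_1}^*\times\mathrm{Win}_{\Gamma_1}^*\leq_W\mathrm{NE}^{ap}_\Gamma$.
   Context: $f\leq_W g$ iff there are computable partial $K,H$ on $\mathbb{N}^\mathbb{N}$ such that for every realizer $G$ of $g$, $p\mapsto K(\langle p,G(H(p))\rangle)$ realizes $f$. $\times$ is the product; $f^*$: $f^0=\mathrm{id}$, $f^{n+1}=f\times f^n$, $f^*(n,x)=f^n(x)$. Rescaling: $(w,A)\mapsto\{wp\mid p\in A\}$. $\overline{\Delta}=\{U^C\mid U\in\Delta\}$; a union of represented classes is named by a tag and a name in the respective class. Games: infinite sequential games with choices $\{0,1\}$, players, turn function $d:\{0,1\}^*\to A$, outcomes $O$, valuation $v$, preferences with well-founded inverses; strategy profiles $s:\{0,1\}^*\to\{0,1\}$; induced play $p_n=s(p_{<n})$; Nash equilibrium: no player can unilaterally switch strategy to get a strictly preferred outcome. Named by numbers of players/outcomes, $d$ and preferences as tables, and for each player $a$ and upper set $U$ w.r.t. $\prec_a$ a $\Gamma$-name of $v^{-1}(U)$. Win/lose games: two players, outcomes $w_1,w_2$, player $i$ prefers $w_i$. $\mathrm{Win}_\Delta$: input a win/lose game with player-1 winning set given by a $\Delta$-name; output which player has a winning strategy. $\mathrm{FindWS}_\Delta$: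 same input restricted to games where player 1 has a winning strategy; output a profile in which one strategy is winning. $\mathrm{NE}^{ap}_\Gamma$: input a two-player game with finitely many outcomes and linear antagonistic preferences; output a Nash equilibrium. Standing assumptions on a pointclass: determinacy of its win/lose games; contains $\emptyset,\{0,1\}^\mathbb{N}$; uniformly computable closure under rescaling and its inverse and intersection with clopens. *)

From Stdlib Require Import Arith List Bool.
Import ListNotations.

Definition baire := nat -> nat.
Definition cantor := nat -> bool.
Definition word := list bool.

Inductive code : Type :=
| cZero
| cSucc
| cProj (i : nat)
| cOrac                          (* the oracle applied to the first argument *)
| cComp (f : code) (gs : list code)
| cRec (f g : code)
| cMu (f : code).

Inductive ev (p : baire) : code -> list nat -> nat -> Prop :=
| ev_zero v : ev p cZero v 0
| ev_succ v : ev p cSucc v (S (nth 0 v 0))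
| ev_proj i v : ev p (cProj i) v (nth i v 0)
| ev_orac v : ev p cOrac v (p (nth 0 v 0))
| ev_comp f gs v ys y : evs p gs v ys -> ev p f ys y -> ev p (cComp f gs) v y
| ev_rec0 f g v y : ev p f v y -> ev p (cRec f g) (0 :: v) y
| ev_recS f g n v r y :
    ev p (cRec f g) (n :: v) r -> ev p g (n :: r :: v) y -> ev p (cRec f g) (S n :: v) y
| ev_mu f v n :
    ev p f (n :: v) 0 -> (forall m, m < n -> exists k, ev p f (m :: v) (S k)) ->
    ev p (cMu f) v n
with evs (p : baire) : list code -> list nat -> list nat -> Prop :=
| evs_nil v : evs p nil v nil
| evs_cons g gs v y ys : ev p g v y -> evs p gs v ys -> evs p (g :: gs) v (y :: ys).

(** [Phi e p q]: the partial computable function on Baire space with code [e]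
    is defined on [p] with value [q]. *)
Definition Phi (e : code) (p q : baire) : Prop := forall n, ev p e [n] (q n).

Definition pair_nat (i n : nat) : nat := 2 ^ i * (2 * n + 1) - 1.
Definition comp (i : nat) (p : baire) : baire := fun n => p (pair_nat i n).
Definition bpair (p q : baire) : baire :=
  fun n => if Nat.even n then p (Nat.div2 n) else q (Nat.div2 n).
Definition bfst (r : baire) : baire := fun n => r (2 * n).
Definition bsnd (r : baire) : baire := fun n => r (2 * n + 1).
Definition btail (p : baire) : baire := fun n => p (S n).

(** bijective coding of words {0,1}^* by naturals *)
Fixpoint wcode (w : word) : nat :=
  match w with
  | nil => 0
  | b :: w' => 2 * wcode w' + (if b then 2 else 1)
  end.

Definition app_word (w : word) (y : cantor) : cantor :=
  fun n => if n <? length w then nth n w false else y (n - length w).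

Definition prefix_of (w : word) (x : cantor) : Prop :=
  forall i, i < length w -> nth i w false = x i.

(** A clopen set named by c: c 0 = number of cylinders, c (S i) = code of the i-th word;
    it denotes the union of the cylinders. *)
Definition clopen_den (c : baire) (x : cantor) : Prop :=
  exists i, i < c 0 /\ exists w, wcode w = c (S i) /\ prefix_of w x.

(** * Represented pointclasses: a partial map from Baire space onto subsets of Cantor space *)
Record rpc := RPC {
  rnames : baire -> Prop;              (* domain of the representation *)
  rdenot : baire -> cantor -> Prop
}.

Definition seteq (A B : cantor -> Prop) : Prop := forall x, A x <-> B x.

Definition profile := word -> bool.

Fixpoint hist (s : profile) (n : nat) : word :=
  match n with
  | 0 => nil
  | S m => hist s m ++ [s (hist s m)]
  end.
Definition play (s : profile) : cantor := fun n => s (hist s n).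

(** Win/lose games: players 0 ("player 1") and 1 ("player 2"), turn function d,
    W = winning set of player 0. *)
Definition wins (a : nat) (W : cantor -> Prop) (x : cantor) : Prop :=
  match a with 0 => W x | _ => ~ W x end.

Definition strat_winning (d : word -> nat) (W : cantor -> Prop) (a : nat) (s : profile) : Prop :=
  forall s' : profile, (forall w, d w = a -> s' w = s w) -> wins a W (play s').

Definition has_ws (d : word -> nat) (W : cantor -> Prop) (a : nat) : Prop :=
  exists s, strat_winning d W a s.

Record game := Game {
  gpl : nat;
  gout : nat;
  gturn : word -> nat;
  gpref : nat -> nat -> nat -> Prop;  (* gpref a o o' : o ≺_a o' (o' strictly preferred) *)
  gval : cantor -> nat
}.

Definition nash (G : game) (s : profile) : Prop :=
  forall a, a < gpl G ->
  forall s' : profile, (forall w, gturn G w <> a -> s' w = s w) ->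
  ~ gpref G a (gval G (play s)) (gval G (play s')).

(** subsets of the outcomes {0..k-1} coded as bitmasks s < 2^k *)
Definition upper_set (R : nat -> nat -> Prop) (k s : nat) : Prop :=
  forall o o', o < k -> o' < k -> Nat.testbit s o = true -> R o o' -> Nat.testbit s o' = true.

(** Naming of games w.r.t. a represented pointclass Gam:
    component 0: number of players, 1: number of outcomes, 2: table of d,
    3: preference tables, 4 + <a,s>: a Gam-name of v^{-1}(U_s) for each
    player a and each upper set U_s w.r.t. ≺_a. *)
Definition names_game (Gam : rpc) (p : baire) (G : game) : Prop :=
  comp 0 p 0 = gpl G /\
  comp 1 p 0 = gout G /\
  (forall w, gturn G w < gpl G) /\
  (forall x, gval G x < gout G) /\
  (forall w, comp 2 p (wcode w) = gturn G w) /\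
  (forall a o o', a < gpl G -> o < gout G -> o' < gout G ->
     (gpref G a o o' <-> comp 3 p (pair_nat a (pair_nat o o')) = 1)) /\
  (forall a s, a < gpl G -> s < 2 ^ gout G -> upper_set (gpref G a) (gout G) s ->
     rnames Gam (comp (4 + pair_nat a s) p) /\
     seteq (rdenot Gam (comp (4 + pair_nat a s) p)) (fun x => Nat.testbit s (gval G x) = true)).

(** two players, linear antagonistic preferences *)
Definition ap_game (G : game) : Prop :=
  gpl G = 2 /\
  (forall o, o < gout G -> ~ gpref G 0 o o) /\
  (forall o1 o2 o3, o1 < gout G -> o2 < gout G -> o3 < gout G ->
     gpref G 0 o1 o2 -> gpref G 0 o2 o3 -> gpref G 0 o1 o3) /\
  (forall o o', o < gout G -> o' < gout G -> o <> o' -> gpref G 0 o o' \/ gpref G 0 o' o) /\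
  (forall o o', o < gout G -> o' < gout G -> (gpref G 1 o o' <-> gpref G 0 o' o)).

Definition names_profile (q : baire) (s : profile) : Prop :=
  forall w, q (wcode w) = (if s w then 1 else 0).

Record problem := Problem {
  pdom : baire -> Prop;
  psol : baire -> baire -> Prop
}.

Definition realizer (P : problem) (G : baire -> baire) : Prop :=
  forall p, pdom P p -> psol P p (G p).

Definition weihrauch_le (f g : problem) : Prop :=
  exists eH eK : code,
  forall G, realizer g G ->
  forall p, pdom f p ->
  exists h, Phi eH p h /\ pdom g h /\
  exists k, Phi eK (bpair p (G h)) k /\ psol f p k.

Definition prod_problem (f g : problem) : problem :=
  Problem (fun r => pdom f (bfst r) /\ pdom g (bsnd r))
          (fun r s => psol f (bfst r) (bfst s) /\ psol g (bsnd r) (bsnd s)).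

(** identity on a one-point space *)
Definition id_problem : problem := Problem (fun _ => True) (fun _ _ => True).

Fixpoint power_problem (f : problem) (n : nat) : problem :=
  match n with
  | 0 => id_problem
  | S m => prod_problem f (power_problem f m)
  end.

(** f^*: input (n, x) named by p with p 0 = n and tail naming x in X^n *)
Definition star_problem (f : problem) : problem :=
  Problem (fun p => pdom (power_problem f (p 0)) (btail p))
          (fun p q => psol (power_problem f (p 0)) (btail p) q).

(** input name: component 0 = table of d (values in {0,1}), component 1 = Delta-name of W *)
Definition wl_turn (p : baire) : word -> nat := fun w => comp 0 p (wcode w).

Definition wl_dom (Delta : rpc) (p : baire) : Prop :=
  (forall w, wl_turn p w <= 1) /\ rnames Delta (comp 1 p).

Definition Win (Delta : rpc) : problem :=
  Problem (wl_dom Delta)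
    (fun p q => (q 0 = 0 /\ has_ws (wl_turn p) (rdenot Delta (comp 1 p)) 0) \/
                (q 0 = 1 /\ has_ws (wl_turn p) (rdenot Delta (comp 1 p)) 1)).

Definition FindWS (Delta : rpc) : problem :=
  Problem (fun p => wl_dom Delta p /\ has_ws (wl_turn p) (rdenot Delta (comp 1 p)) 0)
    (fun p q => exists s, names_profile q s /\
       exists a, a <= 1 /\ strat_winning (wl_turn p) (rdenot Delta (comp 1 p)) a s).

Definition NEap (Gam : rpc) : problem :=
  Problem (fun p => exists G, names_game Gam p G /\ ap_game G)
    (fun p q => exists s, names_profile q s /\
       forall G, names_game Gam p G -> ap_game G -> nash G s).

Definition standing (Delta : rpc) : Prop :=
  (forall p, rnames Delta p -> forall d : word -> nat, (forall w, d w <= 1) ->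
     has_ws d (rdenot Delta p) 0 \/ has_ws d (rdenot Delta p) 1) /\
  (exists p, rnames Delta p /\ seteq (rdenot Delta p) (fun _ => False)) /\
  (exists p, rnames Delta p /\ seteq (rdenot Delta p) (fun _ => True)) /\
  (* uniformly computable closure under rescaling (w, A) |-> wA;
     a word w is named by any r with r 0 = code w *)
  (exists e, forall w r p, r 0 = wcode w -> rnames Delta p ->
     exists q, Phi e (bpair r p) q /\ rnames Delta q /\
       seteq (rdenot Delta q) (fun x => exists y, rdenot Delta p y /\ forall n, x n = app_word w y n)) /\
  (exists e, forall w r p, r 0 = wcode w -> rnames Delta p ->
     exists q, Phi e (bpair r p) q /\ rnames Delta q /\
       seteq (rdenot Delta q) (fun y => rdenot Delta p (app_word w y))) /\
  (exists e, forall c p, rnames Delta p ->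
     exists q, Phi e (bpair c p) q /\ rnames Delta q /\
       seteq (rdenot Delta q) (fun x => clopen_den c x /\ rdenot Delta p x)).

(** Name p: component 0 = clopen C, component 1 = (n, codes of words w_0..w_{n-1}),
    component 2+i = Gamma_1-name of A_i; denotes C ∪ ⋃_{i<n} w_i A_i. *)
Definition closure_G2 (G1 : rpc) : rpc :=
  RPC (fun p => forall i, i < comp 1 p 0 -> rnames G1 (comp (2 + i) p))
      (fun p x => clopen_den (comp 0 p) x \/
         exists i, i < comp 1 p 0 /\ exists w, wcode w = comp 1 p (S i) /\
           exists y, rdenot G1 (comp (2 + i) p) y /\ forall n, x n = app_word w y n).

Definition co_class (D : rpc) : rpc :=
  RPC (rnames D) (fun p x => ~ rdenot D p x).

Definition union_class (D1 D2 : rpc) : rpc :=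
  RPC (fun p => (p 0 = 0 /\ rnames D1 (btail p)) \/ (p 0 = 1 /\ rnames D2 (btail p)))
      (fun p x => if p 0 =? 0 then rdenot D1 (btail p) x else rdenot D2 (btail p) x).

From Stdlib Require Import Arith List Bool Lia PeanoNat FunctionalExtensionality ClassicalEpsilon.
Import ListNotations.

(** From the instances one computably builds a single two-player game with finitely many,
    linearly and antagonistically ordered outcomes. Player 0 first claims, for each of the [N]
    given win/lose games, that she wins it; player 1 may then challenge one claim, which is
    settled by playing that game. If nobody is challenged player 0 gets [1 + claims] (the claims
    read in binary), a lost defence gives her [0], and a won defence or a challenge of a game she
    did not claim gives her the maximum. In a Nash equilibrium player 1 never challenges, and the
    claims are exactly the games player 0 can win: a false claim would be challenged, and a missing
    one could be added, since she can defend whichever claim is then challenged. The claims thus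
    answer the Win instances, and the equilibrium's replies after a challenge are winning
    strategies for the FindWS instances. The preimage of an upper set of outcomes is a finite
    union of cylinders and of cylinders followed by a winning set, so it lies in Γ2 or in its dual. *)

(** * Total computable functionals *)

(** All the functionals needed are primitive recursive in the oracle. *)
Definition computes (c : code) (F : baire -> list nat -> nat) : Prop :=
  forall p v, ev p c v (F p v).
Definition computes_list (cs : list code) (F : baire -> list nat -> list nat) : Prop :=
  forall p v, evs p cs v (F p v).

Lemma computes_ext c F G : computes c F -> (forall p v, F p v = G p v) -> computes c G.
Proof. intros H E p v. rewrite <- E. apply H. Qed.

Lemma computes_nil : computes_list [] (fun _ _ => []).
Proof. intros p v. constructor. Qed.

Lemma computes_cons c cs F Fs : computes c F -> computes_list cs Fs ->
  computes_list (c :: cs) (fun p v => F p v :: Fs p v).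
Proof. intros H1 H2 p v. constructor; auto. Qed.

Lemma computes_comp f gs F Gs : computes f F -> computes_list gs Gs ->
  computes (cComp f gs) (fun p v => F p (Gs p v)).
Proof. intros H1 H2 p v. econstructor; eauto. Qed.

Lemma computes_proj i : computes (cProj i) (fun _ v => nth i v 0).
Proof. intros p v. constructor. Qed.

Lemma computes_succ : computes cSucc (fun _ v => S (nth 0 v 0)).
Proof. intros p v. constructor. Qed.

Lemma computes_oracle : computes cOrac (fun p v => p (nth 0 v 0)).
Proof. intros p v. constructor. Qed.

Lemma ev_rec_nat_rect p f g F G n v : computes f F -> computes g G ->
  ev p (cRec f g) (n :: v) (nat_rect (fun _ => nat) (F p v) (fun k r => G p (k :: r :: v)) n).
Proof.
  intros Hf Hg. induction n; simpl.
  - constructor; apply Hf.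
  - econstructor; [apply IHn | apply Hg].
Qed.

Lemma computes_rec f g F G cn N cs Cs :
  computes f F -> computes g G -> computes cn N -> computes_list cs Cs ->
  computes (cComp (cRec f g) (cn :: cs))
    (fun p v => nat_rect (fun _ => nat) (F p (Cs p v)) (fun k r => G p (k :: r :: Cs p v)) (N p v)).
Proof.
  intros Hf Hg Hn Hs p v. econstructor.
  - constructor; [apply Hn | apply Hs].
  - apply ev_rec_nat_rect; auto.
Qed.

Fixpoint code_const (k : nat) : code :=
  match k with 0 => cZero | S k => cComp cSucc [code_const k] end.

Lemma computes_const k : computes (code_const k) (fun _ _ => k).
Proof.
  induction k; intros p v; simpl; [constructor|].
  econstructor; [constructor; [apply IHk | constructor] | constructor].
Qed.

Lemma computes_comp1 e (f : baire -> nat -> nat) a A :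
  computes e (fun p v => f p (nth 0 v 0)) -> computes a A ->
  computes (cComp e [a]) (fun p v => f p (A p v)).
Proof.
  intros H HA. apply (computes_comp e [a] _ (fun p v => [A p v]) H).
  repeat apply computes_cons; auto using computes_nil.
Qed.

Lemma computes_comp2 e (f : baire -> nat -> nat -> nat) a A b B :
  computes e (fun p v => f p (nth 0 v 0) (nth 1 v 0)) -> computes a A -> computes b B ->
  computes (cComp e [a; b]) (fun p v => f p (A p v) (B p v)).
Proof.
  intros H HA HB. apply (computes_comp e [a; b] _ (fun p v => [A p v; B p v]) H).
  repeat apply computes_cons; auto using computes_nil.
Qed.

Lemma computes_comp3 e (f : baire -> nat -> nat -> nat -> nat) a A b B c C :
  computes e (fun p v => f p (nth 0 v 0) (nth 1 v 0) (nth 2 v 0)) ->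
  computes a A -> computes b B -> computes c C ->
  computes (cComp e [a; b; c]) (fun p v => f p (A p v) (B p v) (C p v)).
Proof.
  intros H HA HB HC. apply (computes_comp e [a; b; c] _ (fun p v => [A p v; B p v; C p v]) H).
  repeat apply computes_cons; auto using computes_nil.
Qed.

Definition code_add : code := cComp (cRec (cProj 0) (cComp cSucc [cProj 1])) [cProj 0; cProj 1].
Lemma computes_add : computes code_add (fun _ v => nth 0 v 0 + nth 1 v 0).
Proof.
  eapply computes_ext.
  - apply (computes_rec _ _ (fun _ v => nth 0 v 0) (fun _ w => S (nth 1 w 0)) _ (fun _ v => nth 0 v 0)
      _ (fun _ v => [nth 1 v 0])).
    + apply computes_proj.
    + apply (computes_comp1 _ (fun _ => S)); [apply computes_succ | apply computes_proj].
    + apply computes_proj.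
    + apply computes_cons; [apply computes_proj | apply computes_nil].
  - intros p v. simpl. induction (nth 0 v 0); simpl; auto.
Qed.

Definition code_pred : code := cComp (cRec cZero (cProj 0)) [cProj 0].
Lemma computes_pred : computes code_pred (fun _ v => pred (nth 0 v 0)).
Proof.
  eapply computes_ext.
  - eapply (computes_rec _ _ (fun _ _ => 0) (fun _ w => nth 0 w 0) _ (fun _ v => nth 0 v 0) _ (fun _ _ => [])).
    + intros p v; constructor.
    + apply computes_proj.
    + apply computes_proj.
    + apply computes_nil.
  - intros p v; simpl. destruct (nth 0 v 0); auto.
Qed.

Definition code_sub : code := cComp (cRec (cProj 0) (cComp code_pred [cProj 1])) [cProj 1; cProj 0].
Lemma computes_sub : computes code_sub (fun _ v => nth 0 v 0 - nth 1 v 0).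
Proof.
  eapply computes_ext.
  - apply (computes_rec _ _ (fun _ v => nth 0 v 0) (fun _ w => pred (nth 1 w 0)) _ (fun _ v => nth 1 v 0)
      _ (fun _ v => [nth 0 v 0])).
    + apply computes_proj.
    + apply (computes_comp1 _ (fun _ => pred)); [apply computes_pred | apply computes_proj].
    + apply computes_proj.
    + apply computes_cons; [apply computes_proj | apply computes_nil].
  - intros p v; simpl. induction (nth 1 v 0); simpl; [lia|]. rewrite IHn. lia.
Qed.

Definition code_mul : code := cComp (cRec cZero (cComp code_add [cProj 1; cProj 2])) [cProj 0; cProj 1].
Lemma computes_mul : computes code_mul (fun _ v => nth 0 v 0 * nth 1 v 0).
Proof.
  eapply computes_ext.
  - eapply (computes_rec _ _ (fun _ _ => 0) (fun _ w => nth 1 w 0 + nth 2 w 0) _ (fun _ v => nth 0 v 0)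
      _ (fun _ v => [nth 1 v 0])).
    + intros p v; constructor.
    + apply (computes_comp2 _ (fun _ => Nat.add)); [apply computes_add | apply computes_proj | apply computes_proj].
    + apply computes_proj.
    + apply computes_cons; [apply computes_proj | apply computes_nil].
  - intros p v; simpl. induction (nth 0 v 0); simpl; [lia|]. rewrite IHn. lia.
Qed.

Definition code_pow2 : code := cComp (cRec (code_const 1) (cComp code_add [cProj 1; cProj 1])) [cProj 0].
Lemma computes_pow2 : computes code_pow2 (fun _ v => 2 ^ nth 0 v 0).
Proof.
  eapply computes_ext.
  - apply (computes_rec _ _ (fun _ _ => 1) (fun _ w => nth 1 w 0 + nth 1 w 0) _ (fun _ v => nth 0 v 0)
      _ (fun _ _ => [])).
    + apply computes_const.
    + apply (computes_comp2 _ (fun _ => Nat.add)); [apply computes_add | apply computes_proj | apply computes_proj].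
    + apply computes_proj.
    + apply computes_nil.
  - intros p v; simpl. induction (nth 0 v 0); simpl; [lia|]. rewrite IHn. lia.
Qed.

Definition code_div2 : code := cComp (cRec cZero (cComp code_sub [cProj 0; cProj 1])) [cProj 0].
Lemma computes_div2 : computes code_div2 (fun _ v => Nat.div2 (nth 0 v 0)).
Proof.
  eapply computes_ext.
  - eapply (computes_rec _ _ (fun _ _ => 0) (fun _ w => nth 0 w 0 - nth 1 w 0) _ (fun _ v => nth 0 v 0)
      _ (fun _ _ => [])).
    + intros p v; constructor.
    + apply (computes_comp2 _ (fun _ => Nat.sub)); [apply computes_sub | apply computes_proj | apply computes_proj].
    + apply computes_proj.
    + apply computes_nil.
  - intros p v; simpl. induction (nth 0 v 0) as [|n IH]; simpl; auto. rewrite IH.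
    pose proof (Nat.div2_odd n) as H1. pose proof (Nat.div2_odd (S n)) as H2.
    rewrite Nat.odd_succ, <- Nat.negb_odd in H2. destruct (Nat.odd n); simpl in *; lia.
Qed.

Definition ifz (c a b : nat) : nat := match c with 0 => a | S _ => b end.

Definition code_ifz : code := cComp (cRec (cProj 0) (cProj 3)) [cProj 0; cProj 1; cProj 2].
Lemma computes_ifz : computes code_ifz (fun _ v => ifz (nth 0 v 0) (nth 1 v 0) (nth 2 v 0)).
Proof.
  eapply computes_ext.
  - apply (computes_rec _ _ (fun _ v => nth 0 v 0) (fun _ w => nth 3 w 0) _ (fun _ v => nth 0 v 0)
      _ (fun _ v => [nth 1 v 0; nth 2 v 0])).
    + apply computes_proj.
    + apply computes_proj.
    + apply computes_proj.
    + repeat apply computes_cons; auto using computes_proj, computes_nil.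
  - intros p v; simpl. destruct (nth 0 v 0); simpl; auto.
Qed.

Ltac lift1 k := eapply (computes_comp1 _ _ _ _ k).
Ltac lift2 k := eapply (computes_comp2 _ _ _ _ _ _ k).
Ltac lift3 k := eapply (computes_comp3 _ _ _ _ _ _ _ _ k).

Ltac computes_arith_step :=
  lazymatch goal with
  | |- computes _ (fun p v => nth _ v 0) => apply computes_proj
  | |- computes _ (fun p v => p _) => lift1 computes_oracle
  | |- computes _ (fun p v => S _) => lift1 computes_succ
  | |- computes _ (fun p v => _ + _) => lift2 computes_add
  | |- computes _ (fun p v => _ - _) => lift2 computes_sub
  | |- computes _ (fun p v => _ * _) => lift2 computes_mul
  | |- computes _ (fun p v => pred _) => lift1 computes_pred
  | |- computes _ (fun p v => 2 ^ _) => eapply (computes_comp1 _ (fun _ => Nat.pow 2) _ _ computes_pow2)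
  | |- computes _ (fun p v => Nat.div2 _) => lift1 computes_div2
  | |- computes _ (fun p v => ifz _ _ _) => lift3 computes_ifz
  | |- computes _ (fun _ _ => _) => apply computes_const
  end.

Definition ltb_nat (a b : nat) : nat := if a <? b then 1 else 0.
Definition eqb_nat (a b : nat) : nat := if a =? b then 1 else 0.

Lemma computable_ltb : { c | computes c (fun _ v => ltb_nat (nth 0 v 0) (nth 1 v 0)) }.
Proof.
  eexists. eapply computes_ext with (F := fun _ v => ifz (nth 1 v 0 - nth 0 v 0) 0 1).
  - repeat computes_arith_step.
  - intros p v; unfold ltb_nat. destruct (Nat.ltb_spec (nth 0 v 0) (nth 1 v 0));
      destruct (nth 1 v 0 - nth 0 v 0) eqn:E; simpl; auto; lia.
Defined.

Lemma computable_eqb : { c | computes c (fun _ v => eqb_nat (nth 0 v 0) (nth 1 v 0)) }.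
Proof.
  eexists.
  eapply computes_ext with (F := fun _ v => ifz ((nth 1 v 0 - nth 0 v 0) + (nth 0 v 0 - nth 1 v 0)) 1 0).
  - repeat computes_arith_step.
  - intros p v; unfold eqb_nat. destruct (Nat.eqb_spec (nth 0 v 0) (nth 1 v 0));
      destruct ((nth 1 v 0 - nth 0 v 0) + (nth 0 v 0 - nth 1 v 0)) eqn:E; simpl; auto; lia.
Defined.

Definition sum_below (g : nat -> nat) (n : nat) : nat := nat_rect (fun _ => nat) 0 (fun k r => r + g k) n.
(** The least [k < n] with [g k <> 0], or [n]. *)
Definition first_nonzero (g : nat -> nat) (n : nat) : nat :=
  nat_rect (fun _ => nat) 0 (fun k r => ifz (ltb_nat r k) (ifz (g k) (S k) k) r) n.

Fixpoint code_projs (i a : nat) : list code :=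
  match a with 0 => [] | S a => cProj i :: code_projs (S i) a end.

Lemma computes_projs i a : computes_list (code_projs i a) (fun _ w => map (fun j => nth j w 0) (seq i a)).
Proof. revert i; induction a; intros i p w; simpl; constructor; [constructor | apply IHa]. Qed.

Lemma map_nth_seq (E : list nat) : map (fun j => nth j E 0) (seq 0 (length E)) = E.
Proof. induction E; simpl; auto. f_equal. rewrite <- seq_shift, map_map. exact IHE. Qed.

Lemma map_nth_seq_shift2 k r (E : list nat) : map (fun j => nth j (k :: r :: E) 0) (seq 2 (length E)) = E.
Proof.
  rewrite <- (map_nth_seq E) at 2.
  rewrite <- (seq_shift (length E) 1), <- seq_shift, !map_map. reflexivity.
Qed.

Ltac computes_cmp_step :=
  lazymatch goal with
  | |- computes _ (fun p v => ltb_nat _ _) => lift2 (proj2_sig computable_ltb)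
  | |- computes _ (fun p v => eqb_nat _ _) => lift2 (proj2_sig computable_eqb)
  | _ => computes_arith_step
  end.

Lemma computes_counter_args f F a :
  computes f F ->
  computes (cComp f (cProj 0 :: code_projs 2 a))
    (fun p w => F p (nth 0 w 0 :: map (fun j => nth j w 0) (seq 2 a))).
Proof.
  intros Hf. apply (computes_comp f _ F (fun _ w => nth 0 w 0 :: map (fun j => nth j w 0) (seq 2 a)) Hf).
  apply computes_cons; [apply computes_proj | apply computes_projs].
Qed.

Lemma computable_sum f F a cn N cs Cs :
  computes f F -> computes cn N -> computes_list cs Cs -> (forall p v, length (Cs p v) = a) ->
  { c | computes c (fun p v => sum_below (fun k => F p (k :: Cs p v)) (N p v)) }.
Proof.
  intros Hf Hn Hs Hl. eexists. eapply computes_ext.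
  - eapply (computes_rec _ _ (fun _ _ => 0)
      (fun p w => nth 1 w 0 + F p (nth 0 w 0 :: map (fun j => nth j w 0) (seq 2 a))) cn N cs Cs);
      auto using computes_const.
    computes_arith_step; [apply computes_proj | apply computes_counter_args; exact Hf].
  - intros p v. unfold sum_below. rewrite <- (Hl p v). induction (N p v); [reflexivity|].
    cbn [nat_rect]. rewrite IHn, map_nth_seq_shift2. reflexivity.
Defined.

Lemma computable_first f F a cn N cs Cs :
  computes f F -> computes cn N -> computes_list cs Cs -> (forall p v, length (Cs p v) = a) ->
  { c | computes c (fun p v => first_nonzero (fun k => F p (k :: Cs p v)) (N p v)) }.
Proof.
  intros Hf Hn Hs Hl. eexists. eapply computes_ext.
  - eapply (computes_rec _ _ (fun _ _ => 0)
      (fun p w => ifz (ltb_nat (nth 1 w 0) (nth 0 w 0))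
         (ifz (F p (nth 0 w 0 :: map (fun j => nth j w 0) (seq 2 a))) (S (nth 0 w 0)) (nth 0 w 0))
         (nth 1 w 0)) cn N cs Cs); auto using computes_const.
    repeat computes_cmp_step. apply computes_counter_args; exact Hf.
  - intros p v. unfold first_nonzero. rewrite <- (Hl p v). induction (N p v); [reflexivity|].
    cbn [nat_rect]. rewrite IHn, map_nth_seq_shift2. reflexivity.
Defined.

Lemma computable_iter h ch : computes ch (fun _ v => h (nth 0 v 0)) ->
  { c | computes c (fun _ v => Nat.iter (nth 0 v 0) h (nth 1 v 0)) }.
Proof.
  intros H. eexists. eapply computes_ext.
  - eapply (computes_rec _ _ (fun _ v => nth 0 v 0) (fun _ w => h (nth 1 w 0)) _ (fun _ v => nth 0 v 0)
      _ (fun _ v => [nth 1 v 0])).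
    + apply computes_proj.
    + eapply (computes_comp1 _ (fun _ => h)); [exact H | apply computes_proj].
    + apply computes_proj.
    + apply computes_cons; [apply computes_proj | apply computes_nil].
  - reflexivity.
Defined.

Lemma computable_shiftr : { c | computes c (fun _ v => Nat.shiftr (nth 0 v 0) (nth 1 v 0)) }.
Proof.
  eexists. eapply (computes_comp2 _ (fun _ n x => Nat.iter n Nat.div2 x));
    [exact (proj2_sig (computable_iter _ _ computes_div2)) | apply computes_proj | apply computes_proj].
Defined.

(** Arithmetic versions of [tl] and [skipn l] on codes [wcode w]. *)
Definition wcode_tl (c : nat) : nat := Nat.div2 (pred c).
Definition wcode_skipn (l c : nat) : nat := Nat.iter l wcode_tl c.

Lemma computable_wcode_skipn : { c | computes c (fun _ v => wcode_skipn (nth 0 v 0) (nth 1 v 0)) }.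
Proof.
  refine (computable_iter wcode_tl _ _). unfold wcode_tl. repeat computes_arith_step.
Defined.

Ltac computes_shift_step :=
  lazymatch goal with
  | |- computes _ (fun p v => Nat.shiftr _ _) => lift2 (proj2_sig computable_shiftr)
  | |- computes _ (fun p v => wcode_skipn _ _) => lift2 (proj2_sig computable_wcode_skipn)
  | _ => computes_cmp_step
  end.

Definition mod2 (x : nat) : nat := x - 2 * Nat.div2 x.
Definition testbit_nat (b l : nat) : nat := mod2 (Nat.shiftr b l).
Definition trailing_zeros (k : nat) : nat := sum_below (fun i => eqb_nat (Nat.shiftr k (S i) * 2 ^ S i) k) k.
Definition unpair_fst (y : nat) : nat := trailing_zeros (S y).
Definition unpair_snd (y : nat) : nat := Nat.div2 (pred (Nat.shiftr (S y) (unpair_fst y))).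
Definition wcode_hd (c : nat) : nat := ifz c 0 (1 - mod2 c).
Definition wcode_nth (c l : nat) : nat := wcode_hd (wcode_skipn l c).
Definition wcode_length (c : nat) : nat := sum_below (fun l => ifz (wcode_skipn l c) 0 1) c.
Definition wcode_first_true (c n : nat) : nat := first_nonzero (fun k => wcode_nth c (n + k)) n.

Lemma computable_trailing_zeros : { c | computes c (fun _ v => trailing_zeros (nth 0 v 0)) }.
Proof.
  assert (Hstep : { c | computes c (fun _ w =>
            eqb_nat (Nat.shiftr (nth 1 w 0) (S (nth 0 w 0)) * 2 ^ S (nth 0 w 0)) (nth 1 w 0)) })
    by (eexists; repeat computes_shift_step).
  destruct Hstep as [c0 H].
  refine (computable_sum _ _ 1 _ _ [cProj 0] (fun _ v => [nth 0 v 0]) H (computes_proj 0) _ _);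
    [apply computes_cons; [apply computes_proj | apply computes_nil] | reflexivity].
Defined.

Ltac computes_nat_code_step :=
  lazymatch goal with
  | |- computes _ (fun p v => trailing_zeros _) => lift1 (proj2_sig computable_trailing_zeros)
  | _ => computes_shift_step
  end.

Lemma computable_unpair_fst : { c | computes c (fun _ v => unpair_fst (nth 0 v 0)) }.
Proof. eexists. unfold unpair_fst. repeat computes_nat_code_step. Defined.
Lemma computable_unpair_snd : { c | computes c (fun _ v => unpair_snd (nth 0 v 0)) }.
Proof. eexists. unfold unpair_snd, unpair_fst. repeat computes_nat_code_step. Defined.
Lemma computable_pair_nat : { c | computes c (fun _ v => pair_nat (nth 0 v 0) (nth 1 v 0)) }.
Proof. eexists. unfold pair_nat. repeat computes_nat_code_step. Defined.
Lemma computable_mod2 : { c | computes c (fun _ v => mod2 (nth 0 v 0)) }.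
Proof. eexists. unfold mod2. repeat computes_nat_code_step. Defined.
Lemma computable_testbit_nat : { c | computes c (fun _ v => testbit_nat (nth 0 v 0) (nth 1 v 0)) }.
Proof. eexists. unfold testbit_nat, mod2. repeat computes_nat_code_step. Defined.
Lemma computable_wcode_nth : { c | computes c (fun _ v => wcode_nth (nth 0 v 0) (nth 1 v 0)) }.
Proof. eexists. unfold wcode_nth, wcode_hd, mod2. repeat computes_nat_code_step. Defined.

Lemma computable_wcode_length : { c | computes c (fun _ v => wcode_length (nth 0 v 0)) }.
Proof.
  assert (Hstep : { c | computes c (fun _ w => ifz (wcode_skipn (nth 0 w 0) (nth 1 w 0)) 0 1) })
    by (eexists; repeat computes_shift_step).
  destruct Hstep as [c0 H].
  refine (computable_sum _ _ 1 _ _ [cProj 0] (fun _ v => [nth 0 v 0]) H (computes_proj 0) _ _);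
    [apply computes_cons; [apply computes_proj | apply computes_nil] | reflexivity].
Defined.

Lemma computable_wcode_first_true :
  { c | computes c (fun _ v => wcode_first_true (nth 0 v 0) (nth 1 v 0)) }.
Proof.
  assert (Hstep : { c | computes c (fun _ w => wcode_nth (nth 1 w 0) (nth 2 w 0 + nth 0 w 0)) })
    by (eexists; lift2 (proj2_sig computable_wcode_nth); repeat computes_arith_step).
  destruct Hstep as [c0 H].
  refine (computable_first _ _ 2 _ _ [cProj 0; cProj 1] (fun _ v => [nth 0 v 0; nth 1 v 0])
            H (computes_proj 1) _ _);
    [repeat apply computes_cons; auto using computes_proj, computes_nil | reflexivity].
Defined.

Ltac computes_step :=
  lazymatch goal with
  | |- computes _ (fun p v => unpair_fst _) => lift1 (proj2_sig computable_unpair_fst)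
  | |- computes _ (fun p v => unpair_snd _) => lift1 (proj2_sig computable_unpair_snd)
  | |- computes _ (fun p v => pair_nat _ _) => lift2 (proj2_sig computable_pair_nat)
  | |- computes _ (fun p v => mod2 _) => lift1 (proj2_sig computable_mod2)
  | |- computes _ (fun p v => testbit_nat _ _) => lift2 (proj2_sig computable_testbit_nat)
  | |- computes _ (fun p v => wcode_nth _ _) => lift2 (proj2_sig computable_wcode_nth)
  | |- computes _ (fun p v => wcode_length _) => lift1 (proj2_sig computable_wcode_length)
  | |- computes _ (fun p v => wcode_first_true _ _) => lift2 (proj2_sig computable_wcode_first_true)
  | _ => computes_nat_code_step
  end.

(** * Specifications of the coding functions *)

Lemma mod2_spec x : mod2 x = x mod 2.
Proof. unfold mod2. rewrite Nat.div2_div. pose proof (Nat.div_mod x 2). lia. Qed.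

Lemma testbit_nat_spec b l : testbit_nat b l = Nat.b2n (Nat.testbit b l).
Proof.
  unfold testbit_nat. rewrite mod2_spec, Nat.shiftr_div_pow2. pose proof (Nat.testbit_spec' b l).
  destruct (Nat.testbit b l); simpl in *; lia.
Qed.

Lemma ifz_pos t a b : 1 <= t -> ifz t a b = b.
Proof. destruct t; simpl; auto; lia. Qed.

Lemma sum_below_ext g1 g2 n : (forall k, k < n -> g1 k = g2 k) -> sum_below g1 n = sum_below g2 n.
Proof. induction n; simpl; intros H; auto. rewrite IHn, H; auto. Qed.

Lemma sum_below_indicator i n : sum_below (fun k => if k <? i then 1 else 0) n = Nat.min i n.
Proof. induction n; simpl; [lia|]. rewrite IHn. destruct (Nat.ltb_spec n i); lia. Qed.

Lemma first_nonzero_spec g n :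
  first_nonzero g n <= n /\ (forall k, k < first_nonzero g n -> g k = 0) /\
  (first_nonzero g n < n -> g (first_nonzero g n) <> 0).
Proof.
  induction n as [|n (H1 & H2 & H3)]; [simpl; split; [lia | split]; intros; lia|].
  unfold first_nonzero in *; cbn [nat_rect]. set (r := nat_rect _ _ _ n) in *.
  unfold ltb_nat. destruct (Nat.ltb_spec r n); [simpl; split; [lia | split]; auto|].
  assert (Er : r = n) by lia. rewrite Er in *. clearbody r. subst r.
  destruct (g n) eqn:E; simpl; split; try lia; split; intros; try lia; auto.
  destruct (Nat.eq_dec k n); subst; auto. apply H2; lia.
Qed.

Lemma first_nonzero_unique g n r : r <= n -> (forall k, k < r -> g k = 0) -> (r < n -> g r <> 0) ->
  first_nonzero g n = r.
Proof.
  intros A B C. destruct (first_nonzero_spec g n) as (H1 & H2 & H3).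
  destruct (Nat.lt_trichotomy r (first_nonzero g n)) as [L | [E | L]]; auto; exfalso.
  - apply C; [lia | apply H2; auto].
  - apply H3; [lia | apply B; auto].
Qed.

Lemma pow2_pos i : 0 < 2 ^ i.
Proof. apply Nat.neq_0_lt_0, Nat.pow_nonzero; lia. Qed.

Lemma pow2_mul_odd_mod i n m : (2 ^ i * (2 * n + 1)) mod 2 ^ m = 0 <-> m <= i.
Proof.
  split.
  - intros H. destruct (Nat.le_gt_cases m i); auto. exfalso.
    apply Nat.Lcm0.mod_divide in H.
    destruct H as [c Hc]. replace m with (i + S (m - S i)) in Hc by lia.
    rewrite Nat.pow_add_r in Hc.
    assert (2 * n + 1 = c * 2 ^ S (m - S i)).
    { apply (Nat.mul_cancel_l _ _ (2 ^ i)); [apply Nat.pow_nonzero; lia|]. rewrite Hc. ring. }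
    rewrite Nat.pow_succ_r in H by lia. lia.
  - intros H. apply Nat.Lcm0.mod_divide.
    exists (2 ^ (i - m) * (2 * n + 1)). replace i with (i - m + m) at 1 by lia.
    rewrite Nat.pow_add_r. ring.
Qed.

Lemma trailing_zeros_spec i n : trailing_zeros (2 ^ i * (2 * n + 1)) = i.
Proof.
  unfold trailing_zeros. set (k := 2 ^ i * (2 * n + 1)).
  assert (Hk : i < k) by (pose proof (Nat.pow_gt_lin_r 2 i); unfold k; nia).
  rewrite (sum_below_ext _ (fun j => if j <? i then 1 else 0)), sum_below_indicator; [lia|].
  intros j _. unfold eqb_nat. rewrite Nat.shiftr_div_pow2.
  pose proof (pow2_mul_odd_mod i n (S j)) as H. fold k in H.
  pose proof (Nat.div_mod k (2 ^ S j) (Nat.pow_nonzero 2 (S j) ltac:(lia))).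
  destruct (Nat.eqb_spec (k / 2 ^ S j * 2 ^ S j) k); destruct (Nat.ltb_spec j i); auto; exfalso.
  - assert (Hm : k mod 2 ^ S j = 0) by lia. apply H in Hm. lia.
  - assert (Hm : k mod 2 ^ S j = 0) by (apply H; lia). lia.
Qed.

Lemma pair_nat_succ i n : S (pair_nat i n) = 2 ^ i * (2 * n + 1).
Proof. unfold pair_nat. pose proof (pow2_pos i). nia. Qed.

Lemma unpair_fst_pair i n : unpair_fst (pair_nat i n) = i.
Proof. unfold unpair_fst. rewrite pair_nat_succ. apply trailing_zeros_spec. Qed.

Lemma unpair_snd_pair i n : unpair_snd (pair_nat i n) = n.
Proof.
  unfold unpair_snd. rewrite unpair_fst_pair, pair_nat_succ, Nat.shiftr_div_pow2.
  rewrite Nat.mul_comm, Nat.div_mul by (apply Nat.pow_nonzero; lia).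
  rewrite Nat.div2_div. replace (pred (2 * n + 1)) with (n * 2) by lia. apply Nat.div_mul; lia.
Qed.

Lemma wcode_app w u : wcode (w ++ u) = wcode w + 2 ^ length w * wcode u.
Proof. induction w as [|b w IH]; simpl; [lia|]. rewrite IH. destruct b; lia. Qed.

Lemma wcode_inj w u : wcode w = wcode u -> w = u.
Proof.
  revert u; induction w as [|a w IH]; intros [|b u]; simpl; intros H; auto.
  - destruct b; lia.
  - destruct a; lia.
  - destruct a, b; try lia; f_equal; apply IH; lia.
Qed.

Lemma length_le_wcode w : length w <= wcode w.
Proof. induction w as [|b w IH]; simpl; auto. destruct b; lia. Qed.

Lemma wcode_tl_wcode w : wcode_tl (wcode w) = wcode (tl w).
Proof.
  unfold wcode_tl. destruct w as [|[|] w]; simpl; auto.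
  - replace (pred (wcode w + (wcode w + 0) + 2)) with (S (2 * wcode w)) by lia.
    apply Nat.div2_succ_double.
  - replace (pred (wcode w + (wcode w + 0) + 1)) with (2 * wcode w) by lia. apply Nat.div2_double.
Qed.

Lemma skipn_succ_tl {A} l (w : list A) : skipn (S l) w = tl (skipn l w).
Proof. revert w; induction l; intros [|a w]; simpl; auto. rewrite <- IHl. destruct w; reflexivity. Qed.

Lemma wcode_skipn_wcode l w : wcode_skipn l (wcode w) = wcode (skipn l w).
Proof.
  induction l; [reflexivity|].
  change (wcode_tl (wcode_skipn l (wcode w)) = wcode (skipn (S l) w)).
  rewrite IHl, wcode_tl_wcode, skipn_succ_tl. reflexivity.
Qed.

Lemma wcode_hd_wcode w : wcode_hd (wcode w) = Nat.b2n (hd false w).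
Proof.
  unfold wcode_hd. destruct w as [|[|] w]; simpl; auto; rewrite mod2_spec.
  - replace (wcode w + (wcode w + 0) + 2) with (S (wcode w) * 2) by lia. rewrite Nat.Div0.mod_mul. reflexivity.
  - replace (wcode w + (wcode w + 0) + 1) with (1 + wcode w * 2) by lia. rewrite Nat.Div0.mod_add. reflexivity.
Qed.

Lemma wcode_nth_wcode w l : wcode_nth (wcode w) l = Nat.b2n (nth l w false).
Proof.
  unfold wcode_nth. rewrite wcode_skipn_wcode, wcode_hd_wcode.
  replace (nth l w false) with (nth 0 (skipn l w) false) by (rewrite nth_skipn; f_equal; lia).
  destruct (skipn l w); reflexivity.
Qed.

Lemma wcode_length_wcode w : wcode_length (wcode w) = length w.
Proof.
  unfold wcode_length. rewrite (sum_below_ext _ (fun k => if k <? length w then 1 else 0)).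
  - rewrite sum_below_indicator. pose proof (length_le_wcode w). lia.
  - intros k _. rewrite wcode_skipn_wcode. destruct (Nat.ltb_spec k (length w)).
    + destruct (skipn k w) as [|b u] eqn:E.
      * apply (f_equal (@length _)) in E. rewrite length_skipn in E. simpl in E. lia.
      * simpl. rewrite ifz_pos by (destruct b; lia). reflexivity.
    + rewrite skipn_all2 by lia. reflexivity.
Qed.

(** * Claims, words and plays *)

Lemma testbit_pow2_mul_add_low a c N l : a < 2 ^ N -> l < N -> Nat.testbit (2 ^ N * c + a) l = Nat.testbit a l.
Proof.
  intros H1 H2. rewrite <- (Nat.mod_pow2_bits_low _ N) by auto.
  rewrite Nat.mul_comm, Nat.add_comm, Nat.Div0.mod_add, Nat.mod_small by auto. reflexivity.
Qed.

Lemma testbit_pow2_mul_add_high a c N l : a < 2 ^ N -> Nat.testbit (2 ^ N * c + a) (l + N) = Nat.testbit c l.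
Proof.
  intros H. rewrite <- Nat.div_pow2_bits. f_equal.
  rewrite Nat.mul_comm, Nat.add_comm, Nat.div_add, Nat.div_small by (auto; apply Nat.pow_nonzero; lia).
  reflexivity.
Qed.

Lemma testbit_lt_pow2 a N l : a < 2 ^ N -> N <= l -> Nat.testbit a l = false.
Proof.
  intros H1 H2. replace a with (2 ^ N * 0 + a) by lia. replace l with (l - N + N) by lia.
  rewrite testbit_pow2_mul_add_high by auto. apply Nat.bits_0.
Qed.

Lemma bits_inj_lt_pow2 a b N : a < 2 ^ N -> b < 2 ^ N ->
  (forall l, l < N -> Nat.testbit a l = Nat.testbit b l) -> a = b.
Proof.
  intros Ha Hb H. apply Nat.bits_inj. intros l. destruct (Nat.lt_ge_cases l N); auto.
  rewrite !(testbit_lt_pow2 _ N) by auto. reflexivity.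
Qed.

Lemma shiftr_pow2_mul_add N K b : b < 2 ^ N -> Nat.shiftr (2 ^ N * K + b) N = K.
Proof.
  intros H. rewrite Nat.shiftr_div_pow2, Nat.mul_comm, Nat.add_comm, Nat.div_add by (apply Nat.pow_nonzero; lia).
  rewrite Nat.div_small; auto.
Qed.

Lemma pow2_mul_shiftr_le N i : 2 ^ N * Nat.shiftr i N <= i /\ i - 2 ^ N * Nat.shiftr i N < 2 ^ N.
Proof.
  rewrite Nat.shiftr_div_pow2. pose proof (Nat.div_mod i (2 ^ N) (Nat.pow_nonzero 2 N ltac:(lia))).
  pose proof (Nat.mod_upper_bound i (2 ^ N) (Nat.pow_nonzero 2 N ltac:(lia))). lia.
Qed.

Definition claims (N : nat) (x : cantor) : nat := sum_below (fun l => if x l then 2 ^ l else 0) N.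

Lemma claims_lt N x : claims N x < 2 ^ N.
Proof. induction N; unfold claims in *; simpl; [lia|]. destruct (x N); lia. Qed.

Lemma claims_succ N x : claims (S N) x = 2 ^ N * Nat.b2n (x N) + claims N x.
Proof. unfold claims. simpl. destruct (x N); simpl; lia. Qed.

Lemma testbit_claims N x l : l < N -> Nat.testbit (claims N x) l = x l.
Proof.
  induction N; intros H; [lia|]. rewrite claims_succ. pose proof (claims_lt N x) as Hlt.
  destruct (Nat.eq_dec l N) as [->|].
  - pose proof (testbit_pow2_mul_add_high _ (Nat.b2n (x N)) N 0 Hlt) as E. simpl in E.
    rewrite E. destruct (x N); reflexivity.
  - rewrite testbit_pow2_mul_add_low by (auto; lia). apply IHN. lia.
Qed.

Lemma claims_eq N x b : b < 2 ^ N -> (forall l, l < N -> Nat.testbit b l = x l) -> claims N x = b.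
Proof.
  intros H1 H2. apply (bits_inj_lt_pow2 _ _ N); auto using claims_lt.
  intros l Hl. rewrite testbit_claims, H2; auto.
Qed.

Definition bits_word (b N : nat) : word := map (Nat.testbit b) (seq 0 N).

Lemma length_bits_word b N : length (bits_word b N) = N.
Proof. unfold bits_word. rewrite length_map, length_seq. reflexivity. Qed.

Lemma nth_bits_word b N l : l < N -> nth l (bits_word b N) false = Nat.testbit b l.
Proof.
  intros H. unfold bits_word. rewrite nth_indep with (d' := Nat.testbit b 0) by (rewrite length_map, length_seq; auto).
  rewrite map_nth, seq_nth; auto.
Qed.

Lemma firstn_bits_word b N k : k <= N -> firstn k (bits_word b N) = bits_word b k.
Proof.
  intros H. unfold bits_word. rewrite firstn_map. f_equal.
  replace N with (k + (N - k)) by lia. rewrite seq_app, firstn_app, length_seq, Nat.sub_diag, app_nil_r.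
  apply firstn_all2. rewrite length_seq. lia.
Qed.

Lemma wcode_bits_word b N : b < 2 ^ N -> wcode (bits_word b N) = 2 ^ N - 1 + b.
Proof.
  revert b; induction N; intros b H; simpl in *; [lia|].
  unfold bits_word in *. simpl. rewrite <- seq_shift, map_map.
  rewrite (map_ext _ (Nat.testbit (b / 2))) by (intros; rewrite Nat.div2_bits; auto).
  rewrite IHN by (apply Nat.Div0.div_lt_upper_bound; lia).
  pose proof (Nat.div2_odd b) as H0. rewrite Nat.div2_div in H0.
  pose proof (pow2_pos N). destruct (Nat.odd b); simpl in *; lia.
Qed.

Lemma wcode_repeat_false K : wcode (repeat false K) = 2 ^ K - 1.
Proof. induction K; simpl; auto. rewrite IHK. pose proof (pow2_pos K). lia. Qed.

Definition shift (x : cantor) (n : nat) : cantor := fun k => x (n + k).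

Lemma prefix_of_app w1 w2 x :
  prefix_of (w1 ++ w2) x <-> prefix_of w1 x /\ prefix_of w2 (shift x (length w1)).
Proof.
  unfold prefix_of, shift. split.
  - intros H. split; intros i Hi.
    + rewrite <- (H i) by (rewrite length_app; lia). rewrite app_nth1; auto.
    + rewrite <- (H (length w1 + i)) by (rewrite length_app; lia). rewrite app_nth2_plus. reflexivity.
  - intros [H1 H2] i Hi. rewrite length_app in Hi. destruct (Nat.lt_ge_cases i (length w1)).
    + rewrite app_nth1; auto.
    + rewrite app_nth2, H2 by lia. f_equal. lia.
Qed.

Lemma prefix_of_bits_word b N x : prefix_of (bits_word b N) x <-> forall l, l < N -> Nat.testbit b l = x l.
Proof.
  unfold prefix_of. rewrite length_bits_word.
  split; intros H l Hl; rewrite <- (H l) by auto; rewrite ?nth_bits_word; auto.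
Qed.

Lemma prefix_of_repeat_false K x : prefix_of (repeat false K) x <-> forall k, k < K -> x k = false.
Proof.
  unfold prefix_of. rewrite repeat_length.
  split; intros H l Hl; rewrite <- (H l) by auto; rewrite ?nth_repeat; auto.
Qed.

Lemma prefix_of_true x : prefix_of [true] x <-> x 0 = true.
Proof.
  unfold prefix_of. simpl. split; [intros H; symmetry; apply (H 0); lia|].
  intros H [|i] Hi; simpl; auto; lia.
Qed.

Lemma app_word_spec w y x :
  (forall n, x n = app_word w y n) <-> prefix_of w x /\ forall n, y n = x (length w + n).
Proof.
  unfold app_word, prefix_of. split.
  - intros H. split.
    + intros i Hi. rewrite H, (proj2 (Nat.ltb_lt _ _) Hi). reflexivity.
    + intros n. rewrite H, (proj2 (Nat.ltb_ge _ _)) by lia. f_equal. lia.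
  - intros [H1 H2] n. destruct (Nat.ltb_spec n (length w)); [rewrite H1; auto|].
    rewrite H2. f_equal. lia.
Qed.

Lemma hist_as_map s n : hist s n = map (play s) (seq 0 n).
Proof. induction n; [reflexivity|]. cbn [hist]. rewrite seq_S, map_app, <- IHn. reflexivity. Qed.

Lemma length_hist s n : length (hist s n) = n.
Proof. rewrite hist_as_map, length_map, length_seq. reflexivity. Qed.

Lemma hist_eq_bits_word s N k : k <= N -> hist s k = bits_word (claims N (play s)) k.
Proof.
  intros H. rewrite hist_as_map. unfold bits_word. apply map_ext_in. intros a Ha. apply in_seq in Ha.
  rewrite testbit_claims; auto. lia.
Qed.

Lemma firstn_succ_nth (w : word) k : k < length w -> firstn (S k) w = firstn k w ++ [nth k w false].
Proof.
  revert w; induction k; intros [|a w] H; simpl in *; try lia; auto. f_equal. apply IHk. lia.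
Qed.

Lemma hist_of_moves s w : (forall k, k < length w -> s (firstn k w) = nth k w false) -> hist s (length w) = w.
Proof.
  intros H. assert (E : forall k, k <= length w -> hist s k = firstn k w).
  { induction k; intros Hk; auto. cbn [hist]. rewrite IHk, H, firstn_succ_nth by lia. reflexivity. }
  rewrite E, firstn_all; auto.
Qed.

Lemma prefix_of_play s n : prefix_of (hist s n) (play s).
Proof.
  intros i Hi. rewrite length_hist in Hi. rewrite hist_as_map.
  rewrite nth_indep with (d' := play s 0) by (rewrite length_map, length_seq; auto).
  rewrite map_nth, seq_nth; auto.
Qed.

Lemma hist_of_prefix s w : prefix_of w (play s) -> hist s (length w) = w.
Proof.
  intros H. apply nth_ext with (d := false) (d' := false); rewrite length_hist; auto.
  intros n Hn. rewrite H by auto. apply prefix_of_play. rewrite length_hist; auto.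
Qed.

Lemma shift_play s w : hist s (length w) = w -> shift (play s) (length w) = play (fun u => s (w ++ u)).
Proof.
  intros H. assert (E : forall n, hist s (length w + n) = w ++ hist (fun u => s (w ++ u)) n).
  { induction n; [rewrite Nat.add_0_r, app_nil_r; auto|].
    rewrite Nat.add_succ_r. simpl. rewrite IHn, app_assoc. reflexivity. }
  apply functional_extensionality. intros n. unfold shift, play. rewrite E. reflexivity.
Qed.

Lemma play_ext s s' : (forall w, s w = s' w) -> play s = play s'.
Proof. intros H. replace s' with s; auto. apply functional_extensionality; auto. Qed.

Lemma claims_add_bit N K x x' : K < N -> x K = false ->
  (forall l, l < N -> x' l = x l || (l =? K)) -> claims N x' = claims N x + 2 ^ K.
Proof.
  intros HK HxK H. induction N as [|N IH]; [lia|]. rewrite !claims_succ.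
  destruct (Nat.eq_dec K N) as [->|].
  - rewrite H, HxK, Nat.eqb_refl by lia. simpl.
    replace (claims N x') with (claims N x); [lia|].
    unfold claims. apply sum_below_ext. intros l Hl.
    rewrite H, (proj2 (Nat.eqb_neq _ _)), orb_false_r by lia. reflexivity.
  - rewrite IH by (auto; lia). rewrite H, (proj2 (Nat.eqb_neq N K)), orb_false_r by lia. lia.
Qed.

(** * The claim game *)

(** The claim game for [N] win/lose games with turn functions [d j] and winning sets [W j]:
    player 0 first claims games by [N] bits; player 1 then either passes for [N] moves or
    challenges game [K] by [K] falses and a true, after which a challenged claim is played out
    in game [K]. *)
Definition first_true_after (N : nat) (w : word) : nat :=
  first_nonzero (fun k => Nat.b2n (nth (N + k) w false)) N.

Definition claim_turn (N : nat) (d : nat -> word -> nat) (w : word) : nat :=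
  let J := first_true_after N w in
  if J <? N then (if nth J w false then d J (skipn (N + J + 1) w) else 0)
  else if (N <=? length w) && (length w <? 2 * N) then 1 else 0.

Definition challenge (N : nat) (x : cantor) : nat := first_nonzero (fun k => Nat.b2n (x (N + k))) N.

Definition top_outcome (N : nat) : nat := 2 ^ N + 1.

Definition outcome (N : nat) (W : nat -> cantor -> Prop) (x : cantor) : nat :=
  let J := challenge N x in
  if J <? N then
    if x J then (if excluded_middle_informative (W J (shift x (N + J + 1))) then top_outcome N else 0)
    else top_outcome N
  else 1 + claims N x.

Definition challenge_word (b N K : nat) : word := bits_word b N ++ repeat false K ++ [true].
Definition unchallenged_word (b N : nat) : word := bits_word b N ++ repeat false N.

Lemma first_true_after_none N w : (forall k, k < N -> nth (N + k) w false = false) -> first_true_after N w = N.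
Proof.
  intros H. apply first_nonzero_unique; auto; try lia.
  intros k Hk. rewrite H; auto.
Qed.

Lemma first_true_after_challenge N c K u : length c = N -> K < N ->
  first_true_after N (c ++ repeat false K ++ true :: u) = K.
Proof.
  intros Hc HK. apply first_nonzero_unique; try lia.
  - intros k Hk. rewrite <- Hc, app_nth2_plus, app_nth1, nth_repeat by (rewrite repeat_length; lia).
    reflexivity.
  - intros _. rewrite <- Hc, app_nth2_plus, app_nth2 by (rewrite repeat_length; lia).
    rewrite repeat_length, Nat.sub_diag. simpl. lia.
Qed.

Lemma claim_turn_claiming N d w : length w < N -> claim_turn N d w = 0.
Proof.
  intros H. unfold claim_turn. rewrite first_true_after_none.
  - rewrite Nat.ltb_irrefl. destruct (Nat.leb_spec N (length w)); [lia | reflexivity].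
  - intros k Hk. apply nth_overflow. lia.
Qed.

Lemma claim_turn_waiting N d c k : length c = N -> k < N -> claim_turn N d (c ++ repeat false k) = 1.
Proof.
  intros Hc Hk. unfold claim_turn. rewrite first_true_after_none.
  - rewrite Nat.ltb_irrefl, length_app, repeat_length.
    destruct (Nat.leb_spec N (length c + k)), (Nat.ltb_spec (length c + k) (2 * N)); simpl; lia.
  - intros k' Hk'. rewrite <- Hc, app_nth2_plus. destruct (Nat.lt_ge_cases k' k).
    + apply nth_repeat_lt. exact H.
    + apply nth_overflow. rewrite repeat_length. exact H.
Qed.

Lemma claim_turn_challenged N d c K u : length c = N -> K < N ->
  claim_turn N d (c ++ repeat false K ++ true :: u) = if nth K c false then d K u else 0.
Proof.
  intros Hc HK. unfold claim_turn. rewrite first_true_after_challenge by auto.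
  rewrite (proj2 (Nat.ltb_lt _ _) HK), app_nth1 by lia.
  destruct (nth K c false); [|reflexivity]. f_equal.
  rewrite app_assoc, skipn_app, skipn_all2 by (rewrite length_app, repeat_length; lia).
  rewrite length_app, repeat_length. replace (N + K + 1 - (length c + K)) with 1 by lia. reflexivity.
Qed.

Lemma challenge_le N x : challenge N x <= N.
Proof. apply first_nonzero_spec. Qed.

Lemma challenge_spec N x J : J < N ->
  challenge N x = J <-> (forall k, k < J -> x (N + k) = false) /\ x (N + J) = true.
Proof.
  intros HJ. unfold challenge. split.
  - intros E. destruct (first_nonzero_spec (fun k => Nat.b2n (x (N + k))) N) as (_ & H2 & H3).
    rewrite E in *. split.
    + intros k Hk. specialize (H2 k Hk). destruct (x (N + k)); [discriminate | reflexivity].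
    + specialize (H3 HJ). destruct (x (N + J)); [reflexivity | contradiction].
  - intros [H1 H2]. apply first_nonzero_unique; try lia.
    + intros k Hk. rewrite H1; auto.
    + intros _. rewrite H2. discriminate.
Qed.

Lemma challenge_none N x : challenge N x = N <-> forall k, k < N -> x (N + k) = false.
Proof.
  unfold challenge. split.
  - intros E. destruct (first_nonzero_spec (fun k => Nat.b2n (x (N + k))) N) as (_ & H2 & _).
    rewrite E in *. intros k Hk. specialize (H2 k Hk). destruct (x (N + k)); [discriminate | reflexivity].
  - intros H. apply first_nonzero_unique; try lia. intros k Hk. rewrite H; auto.
Qed.

Lemma outcome_lt N W x : outcome N W x < 2 ^ N + 2.
Proof.
  unfold outcome, top_outcome. pose proof (claims_lt N x).
  destruct (_ <? _); [destruct (x _); [destruct (excluded_middle_informative _)|]|]; lia.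
Qed.

Lemma length_challenge_word b N K : length (challenge_word b N K) = N + K + 1.
Proof. unfold challenge_word. rewrite !length_app, length_bits_word, repeat_length. simpl. lia. Qed.

Lemma challenge_word_app b N K u : challenge_word b N K ++ u = bits_word b N ++ repeat false K ++ true :: u.
Proof. unfold challenge_word. rewrite <- !app_assoc. reflexivity. Qed.

Lemma prefix_of_challenge_word b N K x : prefix_of (challenge_word b N K) x <->
  (forall l, l < N -> Nat.testbit b l = x l) /\ (forall k, k < K -> x (N + k) = false) /\ x (N + K) = true.
Proof.
  unfold challenge_word. rewrite !prefix_of_app, prefix_of_bits_word, prefix_of_repeat_false, prefix_of_true.
  rewrite length_bits_word, repeat_length. unfold shift. rewrite Nat.add_0_r. tauto.
Qed.

Lemma prefix_of_unchallenged_word b N x : prefix_of (unchallenged_word b N) x <->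
  (forall l, l < N -> Nat.testbit b l = x l) /\ (forall k, k < N -> x (N + k) = false).
Proof.
  unfold unchallenged_word. rewrite prefix_of_app, prefix_of_bits_word, prefix_of_repeat_false, length_bits_word.
  reflexivity.
Qed.

Lemma challenge_word_of_play N x : challenge N x < N ->
  prefix_of (challenge_word (claims N x) N (challenge N x)) x.
Proof.
  intros HJ. apply prefix_of_challenge_word.
  destruct (proj1 (challenge_spec N x _ HJ) eq_refl) as [H1 H2].
  split; auto. intros l Hl. apply testbit_claims; auto.
Qed.

Lemma outcome_after_challenge_word N W x b K : K < N -> prefix_of (challenge_word b N K) x ->
  outcome N W x =
  if Nat.testbit b K then
    (if excluded_middle_informative (W K (shift x (N + K + 1))) then top_outcome N else 0)
  else top_outcome N.
Proof.
  intros HK H. apply prefix_of_challenge_word in H as (H1 & H2 & H3).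
  unfold outcome. rewrite (proj2 (challenge_spec N x K HK) (conj H2 H3)), (proj2 (Nat.ltb_lt _ _) HK), H1 by auto.
  reflexivity.
Qed.

Lemma outcome_after_unchallenged_word N W x b : b < 2 ^ N -> prefix_of (unchallenged_word b N) x ->
  outcome N W x = 1 + b.
Proof.
  intros Hb H. apply prefix_of_unchallenged_word in H as [H1 H2].
  unfold outcome. rewrite (proj2 (challenge_none _ _) H2), Nat.ltb_irrefl, (claims_eq _ _ b); auto.
Qed.

Lemma outcome_unchallenged N W x : challenge N x = N -> outcome N W x = 1 + claims N x.
Proof. intros E. unfold outcome. rewrite E, Nat.ltb_irrefl. reflexivity. Qed.

Lemma claim_turn_le1 N d w : (forall j u, j < N -> d j u <= 1) -> claim_turn N d w <= 1.
Proof.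
  intros Hd. unfold claim_turn. destruct (Nat.ltb_spec (first_true_after N w) N).
  - destruct (nth _ w false); auto.
  - destruct (_ && _); auto.
Qed.

Definition pref_ap (a o o' : nat) : Prop := if a =? 0 then o < o' else o' < o.

Definition claim_game (N : nat) (d : nat -> word -> nat) (W : nat -> cantor -> Prop) : game :=
  Game 2 (2 ^ N + 2) (claim_turn N d) pref_ap (outcome N W).

Lemma ap_claim_game N d W : ap_game (claim_game N d W).
Proof. unfold ap_game, claim_game, pref_ap; cbn. repeat split; intros; lia. Qed.

(** * Nash equilibria of the claim game *)

Lemma skipn_challenge_word b N j u : skipn (N + j + 1) (challenge_word b N j ++ u) = u.
Proof.
  rewrite skipn_app, skipn_all2 by (rewrite length_challenge_word; lia).
  rewrite length_challenge_word, Nat.sub_diag. reflexivity.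
Qed.

Lemma claim_turn_challenge_word N d b j u : j < N -> Nat.testbit b j = true ->
  claim_turn N d (challenge_word b N j ++ u) = d j u.
Proof.
  intros Hj Hb. rewrite challenge_word_app, claim_turn_challenged by (rewrite ?length_bits_word; auto).
  rewrite nth_bits_word, Hb by auto. reflexivity.
Qed.

Section NashEquilibria.
Variables (N : nat) (d : nat -> word -> nat) (W : nat -> cantor -> Prop).
Hypothesis d_le1 : forall j u, j < N -> d j u <= 1.
Variable s : profile.
Hypothesis s_nash : nash (claim_game N d W) s.

Let B := claims N (play s).

Lemma nash_deviation a s' : a < 2 -> (forall w, claim_turn N d w <> a -> s' w = s w) ->
  ~ pref_ap a (outcome N W (play s)) (outcome N W (play s')).
Proof. intros Ha H. apply (s_nash a Ha s' H). Qed.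

Lemma deviation_claims s' : (forall w, claim_turn N d w <> 1 -> s' w = s w) ->
  forall k, k < N -> s' (bits_word B k) = Nat.testbit B k.
Proof.
  intros Hs' k Hk. rewrite Hs' by (rewrite claim_turn_claiming by (rewrite length_bits_word; auto); lia).
  unfold B. rewrite <- hist_eq_bits_word with (N := N) by lia. rewrite testbit_claims by auto. reflexivity.
Qed.

Lemma deviation_hist s' R : (forall w, claim_turn N d w <> 1 -> s' w = s w) ->
  (forall k, k < length R -> s' (bits_word B N ++ firstn k R) = nth k R false) ->
  hist s' (N + length R) = bits_word B N ++ R.
Proof.
  intros Hs' HR. rewrite <- (length_bits_word B N) at 1. rewrite <- length_app.
  apply hist_of_moves. intros k Hk. rewrite length_app, length_bits_word in Hk.
  destruct (Nat.lt_ge_cases k N).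
  - rewrite firstn_app, length_bits_word, firstn_bits_word, app_nth1 by (rewrite ?length_bits_word; lia).
    replace (k - N) with 0 by lia. rewrite app_nil_r, nth_bits_word by lia. apply deviation_claims; auto.
  - replace k with (length (bits_word B N) + (k - N)) by (rewrite length_bits_word; lia).
    rewrite firstn_app_2, app_nth2_plus. apply HR. lia.
Qed.

Lemma firstn_repeat_le {A} (a : A) k n : k <= n -> firstn k (repeat a n) = repeat a k.
Proof. revert n; induction k; intros [|n] H; simpl; auto; [lia|]. rewrite IHk by lia. reflexivity. Qed.

Definition never_challenge : profile :=
  fun w => if claim_turn N d w =? 1 then false else s w.

Definition claim_nothing : profile :=
  fun w => if claim_turn N d w =? 0 then false else s w.

Lemma outcome_never_challenge : outcome N W (play (never_challenge)) = 1 + B.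
Proof.
  assert (Hh : hist (never_challenge) (N + length (repeat false N)) = unchallenged_word B N).
  { apply deviation_hist.
    - intros w Hw. unfold never_challenge. rewrite (proj2 (Nat.eqb_neq _ _) Hw). reflexivity.
    - intros k Hk. rewrite repeat_length in Hk. unfold never_challenge.
      rewrite firstn_repeat_le, claim_turn_waiting, nth_repeat by (rewrite ?length_bits_word; lia). reflexivity. }
  apply outcome_after_unchallenged_word; [apply claims_lt|].
  rewrite <- Hh. apply prefix_of_play.
Qed.

Lemma outcome_claim_nothing : 1 <= outcome N W (play (claim_nothing)).
Proof.
  set (x := play (claim_nothing)).
  assert (Hx : forall l, l < N -> x l = false).
  { intros l Hl. unfold x, play, claim_nothing at 1. rewrite claim_turn_claiming by (rewrite length_hist; auto).
    reflexivity. }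
  unfold outcome. destruct (Nat.ltb_spec (challenge N x) N).
  - rewrite Hx by auto. unfold top_outcome. lia.
  - lia.
Qed.

(** Player 1 can always pass and player 0 can always claim nothing, so nobody is challenged. *)
Lemma nash_outcome : outcome N W (play s) = 1 + B.
Proof.
  assert (Hup : outcome N W (play s) <= 1 + B).
  { rewrite <- outcome_never_challenge. apply Nat.nlt_ge, (nash_deviation 1); [lia|].
    intros w Hw. unfold never_challenge. destruct (Nat.eqb_spec (claim_turn N d w) 1); auto; lia. }
  assert (Hlow : 1 <= outcome N W (play s)).
  { eapply Nat.le_trans; [apply outcome_claim_nothing|]. apply Nat.nlt_ge, (nash_deviation 0); [lia|].
    intros w Hw. unfold claim_nothing. destruct (Nat.eqb_spec (claim_turn N d w) 0); auto; lia. }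
  pose proof (claims_lt N (play s)). revert Hup Hlow. fold B. unfold outcome, top_outcome.
  destruct (Nat.ltb_spec (challenge N (play s)) N).
  - destruct (play s _); [destruct (excluded_middle_informative _)|]; lia.
  - fold B. lia.
Qed.

Definition challenge_with (j : nat) (tau : profile) : profile := fun w =>
  if claim_turn N d w =? 1 then
    (if length w <? N + j then false else if length w =? N + j then true else tau (skipn (N + j + 1) w))
  else s w.

Lemma hist_challenge_with j tau : j < N ->
  hist (challenge_with j tau) (length (challenge_word B N j)) = challenge_word B N j.
Proof.
  intros Hj. rewrite length_challenge_word, <- Nat.add_assoc.
  replace (j + 1) with (length (repeat false j ++ [true])) by (rewrite length_app, repeat_length; reflexivity).
  apply deviation_hist.
  - intros w Hw. unfold challenge_with. rewrite (proj2 (Nat.eqb_neq _ _) Hw). reflexivity.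
  - intros k Hk. rewrite length_app, repeat_length in Hk. simpl in Hk. unfold challenge_with.
    rewrite firstn_app, repeat_length, length_app, length_bits_word.
    destruct (Nat.lt_ge_cases k j).
    + replace (k - j) with 0 by lia. rewrite app_nil_r, firstn_repeat_le, claim_turn_waiting by
        (rewrite ?length_bits_word; lia).
      rewrite app_nth1, nth_repeat by (rewrite repeat_length; lia).
      rewrite repeat_length, (proj2 (Nat.ltb_lt _ _)) by lia. reflexivity.
    + assert (k = j) as -> by lia. rewrite Nat.sub_diag, app_nil_r, firstn_repeat_le, claim_turn_waiting by
        (rewrite ?length_bits_word; lia).
      rewrite app_nth2, repeat_length, Nat.sub_diag by (rewrite repeat_length; lia).
      rewrite Nat.ltb_irrefl, !Nat.eqb_refl. reflexivity.
Qed.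

Lemma outcome_challenge_with j tau : j < N -> Nat.testbit B j = true ->
  outcome N W (play (challenge_with j tau)) =
  if excluded_middle_informative
       (W j (play (fun u => if d j u =? 1 then tau u else s (challenge_word B N j ++ u))))
  then top_outcome N else 0.
Proof.
  intros Hj Hbit. set (w := challenge_word B N j). pose proof (hist_challenge_with j tau Hj) as Hh.
  rewrite (outcome_after_challenge_word _ _ _ B j Hj), Hbit.
  - pose proof (shift_play _ _ Hh) as Hs. fold w in Hh, Hs. unfold w in Hs at 1.
    rewrite length_challenge_word in Hs. rewrite Hs.
    erewrite play_ext; [reflexivity|]. intros u. cbv beta. unfold challenge_with, w.
    rewrite claim_turn_challenge_word by auto. destruct (d j u =? 1); auto.
    rewrite length_app, length_challenge_word, (proj2 (Nat.ltb_ge _ _)), (proj2 (Nat.eqb_neq _ _)) by lia.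
    rewrite skipn_challenge_word. reflexivity.
  - rewrite <- Hh. apply prefix_of_play.
Qed.

Theorem nash_claim_winning j : j < N -> Nat.testbit B j = true ->
  strat_winning (d j) (W j) 0 (fun u => s (challenge_word B N j ++ u)).
Proof.
  intros Hj Hbit tau Htau. simpl.
  assert (Hdev := nash_deviation 1 (challenge_with j tau) ltac:(lia)).
  unfold pref_ap in Hdev; simpl in Hdev. rewrite nash_outcome, outcome_challenge_with in Hdev by auto.
  replace (play (fun u => if d j u =? 1 then tau u else s (challenge_word B N j ++ u))) with (play tau) in Hdev.
  - destruct (excluded_middle_informative _) as [Hw | Hw]; auto. exfalso. apply Hdev; [|lia].
    intros w Hw'. unfold challenge_with. rewrite (proj2 (Nat.eqb_neq _ _) Hw'). reflexivity.
  - apply play_ext. intros u. specialize (d_le1 j u Hj).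
    destruct (Nat.eqb_spec (d j u) 1); auto. apply Htau. lia.
Qed.

Corollary nash_claim_has_ws j : j < N -> Nat.testbit B j = true -> has_ws (d j) (W j) 0.
Proof. intros Hj Hbit. eexists. apply nash_claim_winning; auto. Qed.

Definition some_winning_strategy (j : nat) : profile :=
  match excluded_middle_informative (has_ws (d j) (W j) 0) with
  | left H => proj1_sig (constructive_indefinite_description _ H)
  | right _ => fun _ => false
  end.

Lemma some_winning_strategy_spec j : has_ws (d j) (W j) 0 -> strat_winning (d j) (W j) 0 (some_winning_strategy j).
Proof.
  intros H. unfold some_winning_strategy. destruct (excluded_middle_informative _) as [H' | H']; [|contradiction].
  exact (proj2_sig (constructive_indefinite_description _ H')).
Qed.

(** Player 0's deviation: claim game [K] as well and, in whichever claimed game is challenged,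
    play some winning strategy. *)
Definition claim_also (K : nat) : profile := fun w =>
  if claim_turn N d w =? 0 then
    (if length w <? N then play s (length w) || (length w =? K)
     else some_winning_strategy (first_true_after N w) (skipn (N + first_true_after N w + 1) w))
  else s w.

Theorem nash_unclaimed_no_ws K : K < N -> Nat.testbit B K = false -> ~ has_ws (d K) (W K) 0.
Proof.
  intros HK Hbit Hws. set (x := play s) in *. set (x' := play (claim_also K)).
  assert (Hdev : ~ 1 + B < outcome N W x').
  { rewrite <- nash_outcome. apply (nash_deviation 0); [lia|].
    intros w Hw. unfold claim_also. rewrite (proj2 (Nat.eqb_neq _ _) Hw). reflexivity. }
  assert (Hx' : forall l, l < N -> x' l = x l || (l =? K)).
  { intros l Hl. unfold x', play at 1, claim_also at 1. rewrite claim_turn_claiming by (rewrite length_hist; auto).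
    rewrite length_hist, (proj2 (Nat.ltb_lt _ _) Hl). reflexivity. }
  assert (HxK : x K = false) by (rewrite <- (testbit_claims N) by auto; exact Hbit).
  pose proof (claims_lt N x). apply Hdev. unfold outcome, top_outcome.
  destruct (Nat.ltb_spec (challenge N x') N) as [HJ | HJ].
  2:{ rewrite (claims_add_bit N K x x') by auto. fold B. pose proof (pow2_pos K). lia. }
  set (J := challenge N x') in *. destruct (x' J) eqn:EJ; [|lia].
  assert (HwsJ : has_ws (d J) (W J) 0).
  { rewrite Hx' in EJ by auto. destruct (x J) eqn:ExJ.
    - apply nash_claim_has_ws; auto. unfold B. fold x. rewrite testbit_claims; auto.
    - apply Nat.eqb_eq in EJ. subst J. rewrite EJ. exact Hws. }
  set (b' := claims N x').
  assert (Hpre : prefix_of (challenge_word b' N J) x') by (apply challenge_word_of_play; auto).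
  assert (Hh : hist (claim_also K) (length (challenge_word b' N J)) = challenge_word b' N J)
    by (apply hist_of_prefix; auto).
  pose proof (shift_play _ _ Hh) as Hs. rewrite length_challenge_word in Hs. fold x' in Hs. rewrite Hs.
  destruct (excluded_middle_informative _) as [_ | Hw]; [lia|].
  exfalso. apply Hw, (some_winning_strategy_spec J HwsJ). intros u Hu.
  assert (Hb' : Nat.testbit b' J = true) by (unfold b'; rewrite testbit_claims; auto).
  unfold claim_also. rewrite claim_turn_challenge_word, Hu by auto. rewrite Nat.eqb_refl.
  rewrite length_app, length_challenge_word, (proj2 (Nat.ltb_ge _ _)) by lia.
  rewrite challenge_word_app, first_true_after_challenge, <- challenge_word_app, skipn_challenge_word
    by (rewrite ?length_bits_word; auto).
  reflexivity.
Qed.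

Corollary nash_claims_iff_has_ws j : j < N -> Nat.testbit B j = true <-> has_ws (d j) (W j) 0.
Proof.
  intros Hj. split; [apply nash_claim_has_ws; auto|].
  intros Hws. destruct (Nat.testbit B j) eqn:E; auto. exfalso. exact (nash_unclaimed_no_ws j Hj E Hws).
Qed.
End NashEquilibria.

(** * Naming the claim game *)

(** An input [p] of FindWS^* × Win^* pairs two lists of instances, of lengths [p 0] and [p 1];
    the FindWS instances become the first subgames. *)
Definition num_games (p : baire) : nat := p 0 + p 1.

Definition subgame_name (p : baire) (j x : nat) : nat :=
  p (ifz (ltb_nat j (p 0)) (2 * (pair_nat (j - p 0) x + 1) + 1) (2 * (pair_nat j x + 1))).

Definition num_outcomes (p : baire) : nat := 2 ^ num_games p + 2.

Definition turn_code (p : baire) (m : nat) : nat :=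
  let N := num_games p in
  let J := wcode_first_true m N in
  ifz (ltb_nat J N)
    (ltb_nat (wcode_length m) (2 * N) - ltb_nat (wcode_length m) N)
    (ifz (wcode_nth m J) 0 (subgame_name p J (pair_nat 0 (wcode_skipn (N + J + 1) m)))).

Definition pref_code (m : nat) : nat :=
  let o := unpair_fst (unpair_snd m) in
  let o' := unpair_snd (unpair_snd m) in
  ifz (unpair_fst m) (ltb_nat o o') (ltb_nat o' o).

Definition threshold (p : baire) (a s : nat) : nat :=
  first_nonzero (fun o => ifz a (testbit_nat s o) (1 - testbit_nat s o)) (num_outcomes p).

(** The codes of [challenge_word b N K] and [unchallenged_word b N] for [b < 2 ^ N]. *)
Definition challenge_code (b N K : nat) : nat := b + 3 * 2 ^ (N + K) - 1.
Definition unchallenged_code (b N : nat) : nat := 2 ^ N - 1 + b + 2 ^ N * (2 ^ N - 1).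

(** The Γ2-name [level_name p t] of [{x | t <= outcome x}] for [1 <= t <= 2 ^ N + 1]. Index
    [i = 2 ^ N * K + b] with [b < 2 ^ N] lists, in the clopen part, the challenge of game [K]
    after claims [b] when [K < N] and [K] is unclaimed, and the unchallenged play with claims
    [t - 1 + (i - N * 2 ^ N)] when [K >= N]; in the shifted part it lists that challenge followed by
    the winning set of game [K] when [K] is claimed. Words for the wrong claim bit are replaced by
    the harmless claims [0]. *)
Definition clopen_count (p : baire) (t : nat) : nat :=
  let N := num_games p in
  ifz t 1 (ltb_nat t (num_outcomes p) * (N * 2 ^ N + (2 ^ N + 1 - t))).

Definition clopen_word (p : baire) (t i : nat) : nat :=
  let N := num_games p in
  let K := Nat.shiftr i N in
  let b := i - 2 ^ N * K in
  ifz t 0 (ifz (ltb_nat K N)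
             (unchallenged_code (t - 1 + (i - N * 2 ^ N)) N)
             (challenge_code ((1 - testbit_nat b K) * b) N K)).

Definition shifted_count (p : baire) (t : nat) : nat :=
  let N := num_games p in
  ifz t 0 (ltb_nat t (num_outcomes p) * (N * 2 ^ N)).

Definition shifted_word (p : baire) (i : nat) : nat :=
  let N := num_games p in
  let K := Nat.shiftr i N in
  let b := i - 2 ^ N * K in
  challenge_code (testbit_nat b K * b) N K.

Definition level_name (p : baire) (t y : nat) : nat :=
  let c := unpair_fst y in
  let z := unpair_snd y in
  ifz c (ifz z (clopen_count p t) (clopen_word p t (pred z)))
    (ifz (pred c) (ifz z (shifted_count p t) (shifted_word p (pred z)))
       (subgame_name p (Nat.shiftr (c - 2) (num_games p)) (pair_nat 1 z))).

Definition upper_name (p : baire) (a s y : nat) : nat :=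
  ifz y a (level_name p (threshold p a s) (pred y)).

(** Component [4 + <a, s>] names the preimage of the upper set [s] of player [a]: for player 0
    it is the level set of its least element, for player 1 the complement of the level set of its
    least non-element. *)
Definition game_name (p : baire) (y : nat) : nat :=
  let c := unpair_fst y in
  let z := unpair_snd y in
  ifz c 2 (ifz (pred c) (num_outcomes p) (ifz (pred (pred c)) (turn_code p z)
    (ifz (pred (pred (pred c))) (pref_code z)
       (upper_name p (unpair_fst (c - 4)) (unpair_snd (c - 4)) z)))).

(** For [o = <p, q>] with [q] naming a profile: the claims of its play, move [k] being read at
    the code [2 ^ k - 1 + r] of the first [k] moves. *)
Definition decoded_claims (o : baire) (n : nat) : nat :=
  nat_rect (fun _ => nat) 0 (fun k r => r + 2 ^ k * o (2 * (2 ^ k - 1 + r) + 1)) n.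

(** Even positions answer the FindWS instances by the profile's replies after a challenge of the
    game, odd positions the Win instances by the negated claim. *)
Definition output_name (o : baire) (n : nat) : nat :=
  let N := o 0 + o 2 in
  let B := decoded_claims o N in
  let y := Nat.div2 n in
  let j := unpair_fst y in
  ifz (mod2 n)
    (o (2 * (challenge_code B N j + 2 ^ (N + j + 1) * unpair_snd y) + 1))
    (1 - testbit_nat B (o 0 + j)).

Lemma computable_turn_code : { c | computes c (fun p v => turn_code p (nth 0 v 0)) }.
Proof. eexists. unfold turn_code, subgame_name, num_games. cbv beta zeta. repeat computes_step. Defined.

Lemma computable_pref_code : { c | computes c (fun _ v => pref_code (nth 0 v 0)) }.
Proof. eexists. unfold pref_code. cbv beta zeta. repeat computes_step. Defined.

Lemma computable_threshold : { c | computes c (fun p v => threshold p (nth 0 v 0) (nth 1 v 0)) }.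
Proof.
  assert (Hstep : { c | computes c (fun _ w =>
     ifz (nth 1 w 0) (testbit_nat (nth 2 w 0) (nth 0 w 0)) (1 - testbit_nat (nth 2 w 0) (nth 0 w 0))) })
    by (eexists; repeat computes_step).
  assert (Hbound : { c | computes c (fun p _ => num_outcomes p) })
    by (eexists; unfold num_outcomes, num_games; repeat computes_step).
  destruct Hstep as [c0 H], Hbound as [c1 H1].
  refine (computable_first _ _ 2 _ _ [cProj 0; cProj 1] (fun _ v => [nth 0 v 0; nth 1 v 0]) H H1 _ _);
    [repeat apply computes_cons; auto using computes_proj, computes_nil | reflexivity].
Defined.

Lemma computable_game_name : { c | computes c (fun p v => game_name p (nth 0 v 0)) }.
Proof.
  eexists.
  unfold game_name, upper_name, level_name, shifted_word, shifted_count, clopen_word, clopen_count,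
    challenge_code, unchallenged_code, num_outcomes, subgame_name, num_games.
  cbv beta zeta.
  repeat lazymatch goal with
    | |- computes _ (fun p v => turn_code p _) => lift1 (proj2_sig computable_turn_code)
    | |- computes _ (fun p v => pref_code _) => lift1 (proj2_sig computable_pref_code)
    | |- computes _ (fun p v => threshold p _ _) => lift2 (proj2_sig computable_threshold)
    | _ => computes_step
    end.
Defined.

Lemma computable_decoded_claims : { c | computes c (fun p v => decoded_claims p (nth 0 v 0)) }.
Proof.
  assert (Hstep : { c | computes c (fun p w =>
     nth 1 w 0 + 2 ^ nth 0 w 0 * p (2 * (2 ^ nth 0 w 0 - 1 + nth 1 w 0) + 1)) })
    by (eexists; repeat computes_step).
  destruct Hstep as [c0 H].
  eexists. eapply computes_ext.
  - apply (computes_rec _ _ (fun _ _ => 0) _ (cProj 0) (fun _ v => nth 0 v 0) [] (fun _ _ => [])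
             (computes_const 0) H (computes_proj 0) computes_nil).
  - reflexivity.
Defined.

Lemma computable_output_name : { c | computes c (fun p v => output_name p (nth 0 v 0)) }.
Proof.
  eexists. unfold output_name, challenge_code. cbv beta zeta.
  repeat lazymatch goal with
    | |- computes _ (fun p v => decoded_claims p _) => lift1 (proj2_sig computable_decoded_claims)
    | _ => computes_step
    end.
Defined.

Definition subgame (p : baire) (j : nat) : baire := subgame_name p j.
Definition subgame_turn (p : baire) (j : nat) : word -> nat := wl_turn (subgame p j).
Definition subgame_win (G1 : rpc) (p : baire) (j : nat) : cantor -> Prop := rdenot G1 (comp 1 (subgame p j)).

Lemma wcode_challenge_word b N K : b < 2 ^ N -> wcode (challenge_word b N K) = challenge_code b N K.
Proof.
  intros H. unfold challenge_word, challenge_code.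
  rewrite !wcode_app, wcode_bits_word, wcode_repeat_false, length_bits_word, repeat_length, Nat.pow_add_r by auto.
  simpl. pose proof (pow2_pos N). pose proof (pow2_pos K). nia.
Qed.

Lemma wcode_unchallenged_word b N : b < 2 ^ N -> wcode (unchallenged_word b N) = unchallenged_code b N.
Proof.
  intros H. unfold unchallenged_word, unchallenged_code.
  rewrite wcode_app, wcode_bits_word, wcode_repeat_false, length_bits_word by auto. lia.
Qed.

Lemma wcode_first_true_wcode w N : wcode_first_true (wcode w) N = first_true_after N w.
Proof.
  unfold wcode_first_true, first_true_after. f_equal.
  apply functional_extensionality. intros k. apply wcode_nth_wcode.
Qed.

Lemma turn_code_spec p w : turn_code p (wcode w) = claim_turn (num_games p) (subgame_turn p) w.
Proof.
  unfold turn_code, claim_turn, ltb_nat. cbv zeta.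
  rewrite wcode_first_true_wcode, wcode_nth_wcode, wcode_length_wcode, wcode_skipn_wcode.
  destruct (first_true_after _ w <? _); cbn [ifz].
  - destruct (nth _ w false); reflexivity.
  - destruct (Nat.leb_spec (num_games p) (length w)), (Nat.ltb_spec (length w) (2 * num_games p)),
      (Nat.ltb_spec (length w) (num_games p)); simpl; lia.
Qed.

Lemma comp0_level_name p t z : comp 0 (level_name p t) z = ifz z (clopen_count p t) (clopen_word p t (pred z)).
Proof. unfold comp, level_name. rewrite unpair_fst_pair, unpair_snd_pair. reflexivity. Qed.

Lemma comp1_level_name p t z : comp 1 (level_name p t) z = ifz z (shifted_count p t) (shifted_word p (pred z)).
Proof. unfold comp, level_name. rewrite unpair_fst_pair, unpair_snd_pair. reflexivity. Qed.

Lemma comp_shifted_level_name p t i :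
  comp (2 + i) (level_name p t) = comp 1 (subgame p (Nat.shiftr i (num_games p))).
Proof.
  apply functional_extensionality. intros z. unfold comp, level_name.
  rewrite unpair_fst_pair, unpair_snd_pair. simpl. rewrite Nat.sub_0_r. reflexivity.
Qed.

Lemma clopen_count_spec p t : 1 <= t <= 2 ^ num_games p + 1 ->
  clopen_count p t = num_games p * 2 ^ num_games p + (2 ^ num_games p + 1 - t).
Proof.
  intros H. unfold clopen_count, num_outcomes, ltb_nat. cbv zeta. rewrite ifz_pos by lia.
  rewrite (proj2 (Nat.ltb_lt _ _)) by lia. lia.
Qed.

Lemma shifted_count_spec p t : 1 <= t <= 2 ^ num_games p + 1 ->
  shifted_count p t = num_games p * 2 ^ num_games p.
Proof.
  intros H. unfold shifted_count, num_outcomes, ltb_nat. cbv zeta. rewrite ifz_pos by lia.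
  rewrite (proj2 (Nat.ltb_lt _ _)) by lia. lia.
Qed.

Lemma clopen_word_challenge p t K b : 1 <= t -> K < num_games p -> b < 2 ^ num_games p ->
  clopen_word p t (2 ^ num_games p * K + b) =
  wcode (challenge_word (if Nat.testbit b K then 0 else b) (num_games p) K).
Proof.
  intros Ht HK Hb. unfold clopen_word, ltb_nat. cbv zeta.
  rewrite ifz_pos, shiftr_pow2_mul_add, (proj2 (Nat.ltb_lt _ _) HK) by lia. cbn [ifz].
  rewrite Nat.add_sub_swap, Nat.sub_diag, Nat.add_0_l, testbit_nat_spec by lia.
  destruct (Nat.testbit b K); simpl; rewrite wcode_challenge_word; auto using pow2_pos.
  rewrite Nat.add_0_r. reflexivity.
Qed.

Lemma clopen_word_unchallenged p t i : 1 <= t -> num_games p <= Nat.shiftr i (num_games p) ->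
  t - 1 + (i - num_games p * 2 ^ num_games p) < 2 ^ num_games p ->
  clopen_word p t i = wcode (unchallenged_word (t - 1 + (i - num_games p * 2 ^ num_games p)) (num_games p)).
Proof.
  intros Ht HK Hb. unfold clopen_word, ltb_nat. cbv zeta.
  rewrite ifz_pos by lia. rewrite (proj2 (Nat.ltb_ge _ _) HK). cbn [ifz].
  rewrite wcode_unchallenged_word; auto.
Qed.

Lemma shifted_word_spec p K b : K < num_games p -> b < 2 ^ num_games p ->
  shifted_word p (2 ^ num_games p * K + b) =
  wcode (challenge_word (if Nat.testbit b K then b else 0) (num_games p) K).
Proof.
  intros HK Hb. unfold shifted_word. cbv zeta.
  rewrite shiftr_pow2_mul_add, Nat.add_sub_swap, Nat.sub_diag, Nat.add_0_l, testbit_nat_spec by lia.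
  destruct (Nat.testbit b K); simpl; rewrite wcode_challenge_word; auto using pow2_pos.
  rewrite Nat.add_0_r. reflexivity.
Qed.

Lemma pow2_mul_add_decompose N i : exists K b, i = 2 ^ N * K + b /\ b < 2 ^ N.
Proof.
  exists (Nat.shiftr i N), (i - 2 ^ N * Nat.shiftr i N).
  pose proof (pow2_mul_shiftr_le N i). lia.
Qed.

Lemma level_name_sound G1 p t x : 1 <= t <= 2 ^ num_games p + 1 ->
  rdenot (closure_G2 G1) (level_name p t) x -> t <= outcome (num_games p) (subgame_win G1 p) x.
Proof.
  intros Ht Hx. set (N := num_games p) in *. pose proof (pow2_pos N).
  assert (Htop : t <= top_outcome N) by (unfold top_outcome; lia).
  destruct Hx as [(i & Hi & w & Hw & Hp) | (i & Hi & w & Hw & y & Hy & Hxy)];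
    [rewrite comp0_level_name, clopen_count_spec in Hi by auto |
     rewrite comp1_level_name, shifted_count_spec in Hi by auto];
    cbn [ifz] in Hi; fold N in Hi; destruct (pow2_mul_add_decompose N i) as (K & b & -> & Hb).
  - rewrite comp0_level_name in Hw. cbn [ifz pred] in Hw. destruct (Nat.lt_ge_cases K N) as [HK | HK].
    + rewrite clopen_word_challenge in Hw by (auto; lia). apply wcode_inj in Hw. subst w.
      rewrite (outcome_after_challenge_word _ _ _ _ _ HK Hp).
      destruct (Nat.testbit b K) eqn:E; rewrite ?Nat.bits_0, ?E; auto.
    + assert (2 ^ N * N <= 2 ^ N * K) by (apply Nat.mul_le_mono_l; lia).
      rewrite clopen_word_unchallenged in Hw by (fold N; rewrite ?shiftr_pow2_mul_add; auto; nia).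
      apply wcode_inj in Hw. subst w. fold N in Hp.
      assert (Hlt : t - 1 + (2 ^ N * K + b - N * 2 ^ N) < 2 ^ N) by nia.
      rewrite (outcome_after_unchallenged_word _ _ _ _ Hlt Hp). lia.
  - assert (HK : K < N) by nia.
    rewrite comp1_level_name in Hw. cbn [ifz pred] in Hw. rewrite shifted_word_spec in Hw by auto.
    apply wcode_inj in Hw. subst w. apply app_word_spec in Hxy as [Hp Hy'].
    rewrite (outcome_after_challenge_word _ _ _ _ _ HK Hp).
    destruct (Nat.testbit b K) eqn:E; rewrite ?Nat.bits_0, ?E; auto.
    destruct (excluded_middle_informative _) as [_ | Hnot]; auto. exfalso. apply Hnot.
    rewrite comp_shifted_level_name, shiftr_pow2_mul_add in Hy by auto.
    replace (shift x (N + K + 1)) with y; auto.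
    apply functional_extensionality. intros n. rewrite Hy', length_challenge_word. reflexivity.
Qed.

Lemma level_name_complete G1 p t x : 1 <= t <= 2 ^ num_games p + 1 ->
  t <= outcome (num_games p) (subgame_win G1 p) x -> rdenot (closure_G2 G1) (level_name p t) x.
Proof.
  intros Ht Hv. cbn [rdenot closure_G2]. unfold clopen_den.
  rewrite comp0_level_name, comp1_level_name, clopen_count_spec, shifted_count_spec by auto. cbn [ifz].
  pose proof (claims_lt (num_games p) x) as HB. pose proof (challenge_le (num_games p) x).
  set (N := num_games p) in *. set (J := challenge N x) in *. set (B := claims N x) in *.
  destruct (Nat.lt_ge_cases J N) as [HJ | HJ].
  - pose proof (challenge_word_of_play N x HJ) as Hp. fold J B in Hp.
    assert (Hbit : Nat.testbit B J = x J) by (apply testbit_claims; auto).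
    destruct (x J) eqn:EJ; [right | left]; exists (2 ^ N * J + B); (split; [nia|]).
    + exists (challenge_word B N J).
      rewrite comp1_level_name. cbn [ifz pred]. rewrite shifted_word_spec, Hbit by auto. split; [reflexivity|].
      exists (shift x (N + J + 1)). split.
      * rewrite comp_shifted_level_name, shiftr_pow2_mul_add by auto.
        rewrite (outcome_after_challenge_word _ _ _ _ _ HJ Hp), Hbit in Hv.
        destruct (excluded_middle_informative _); auto. unfold top_outcome in Hv. lia.
      * apply app_word_spec. split; auto. intros n. rewrite length_challenge_word. reflexivity.
    + exists (challenge_word B N J). split; auto.
      rewrite comp0_level_name. cbn [ifz pred]. rewrite clopen_word_challenge, Hbit by (auto; lia). reflexivity.
  - assert (EJ : challenge N x = N) by (fold J; lia).
    rewrite outcome_unchallenged in Hv by auto. fold B in Hv.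
    left. exists (2 ^ N * N + (B - (t - 1))). split; [lia|].
    exists (unchallenged_word B N). split.
    + rewrite comp0_level_name. cbn [ifz pred].
      rewrite clopen_word_unchallenged; fold N; [f_equal; f_equal; nia | lia | rewrite shiftr_pow2_mul_add; lia | nia].
    + apply prefix_of_unchallenged_word. split; [intros l Hl; apply testbit_claims; auto|].
      apply challenge_none; auto.
Qed.

Lemma level_name_denotes G1 p t x : t <= 2 ^ num_games p + 2 ->
  rdenot (closure_G2 G1) (level_name p t) x <-> t <= outcome (num_games p) (subgame_win G1 p) x.
Proof.
  intros Ht. pose proof (outcome_lt (num_games p) (subgame_win G1 p) x).
  destruct (Nat.eq_dec t 0) as [-> | Ht0]; [|destruct (Nat.eq_dec t (2 ^ num_games p + 2)) as [Etop | Htop]].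
  - split; intros _; [lia|]. left. exists 0. split; [rewrite comp0_level_name; cbn; lia|].
    exists []. split; [reflexivity|]. intros i Hi. simpl in Hi. lia.
  - split; [|lia]. cbn [rdenot closure_G2]. unfold clopen_den.
    rewrite comp0_level_name, comp1_level_name. cbn [ifz].
    unfold clopen_count, shifted_count, num_outcomes, ltb_nat. cbv zeta.
    rewrite !ifz_pos, Etop, Nat.ltb_irrefl by lia.
    intros [(i & Hi & _) | (i & Hi & _)]; simpl in Hi; lia.
  - split; [apply level_name_sound | apply level_name_complete]; lia.
Qed.

Definition subgames_ok (G1 : rpc) (p : baire) : Prop := forall j, j < num_games p -> wl_dom G1 (subgame p j).

Lemma level_name_rnames G1 p t : subgames_ok G1 p -> rnames (closure_G2 G1) (level_name p t).
Proof.
  intros Hok. cbn [rnames closure_G2]. intros i Hi. rewrite comp_shifted_level_name. apply Hok.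
  rewrite comp1_level_name in Hi. cbn [ifz] in Hi. pose proof (pow2_mul_shiftr_le (num_games p) i).
  unfold shifted_count, ltb_nat in Hi. cbv zeta in Hi. destruct t; [simpl in Hi; lia|].
  rewrite ifz_pos in Hi by lia. destruct (_ <? _); nia.
Qed.

Lemma threshold_le p a s : threshold p a s <= num_outcomes p.
Proof. apply first_nonzero_spec. Qed.

Lemma threshold_upper p s o : upper_set (pref_ap 0) (num_outcomes p) s -> o < num_outcomes p ->
  Nat.testbit s o = true <-> threshold p 0 s <= o.
Proof.
  intros Hu Ho. unfold threshold.
  destruct (first_nonzero_spec (fun o => ifz 0 (testbit_nat s o) (1 - testbit_nat s o)) (num_outcomes p))
    as (H1 & H2 & H3).
  cbn [ifz] in *. set (t := first_nonzero _ _) in *. split.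
  - intros Hb. destruct (Nat.lt_ge_cases o t) as [Hlt|]; auto.
    specialize (H2 o Hlt). rewrite testbit_nat_spec, Hb in H2. discriminate.
  - intros Hle. specialize (H3 ltac:(lia)). rewrite testbit_nat_spec in H3.
    destruct (Nat.testbit s t) eqn:Et; [|contradiction].
    destruct (Nat.eq_dec t o) as [<-|]; auto. apply (Hu t o); auto; unfold pref_ap; simpl; lia.
Qed.

Lemma threshold_lower p s o : upper_set (pref_ap 1) (num_outcomes p) s -> o < num_outcomes p ->
  Nat.testbit s o = true <-> o < threshold p 1 s.
Proof.
  intros Hu Ho. unfold threshold.
  destruct (first_nonzero_spec (fun o => ifz 1 (testbit_nat s o) (1 - testbit_nat s o)) (num_outcomes p))
    as (H1 & H2 & H3).
  cbn [ifz] in *. set (t := first_nonzero _ _) in *. split.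
  - intros Hb. destruct (Nat.lt_ge_cases o t); auto. exfalso.
    specialize (H3 ltac:(lia)). rewrite testbit_nat_spec in H3.
    destruct (Nat.testbit s t) eqn:Et; [contradiction|].
    destruct (Nat.eq_dec t o) as [->|]; [congruence|].
    assert (Nat.testbit s t = true) by (apply (Hu o t); auto; unfold pref_ap; simpl; lia). congruence.
  - intros Hl. specialize (H2 o Hl). rewrite testbit_nat_spec in H2.
    destruct (Nat.testbit s o); [reflexivity | discriminate].
Qed.

Lemma comp_game_name p c z : c < 4 ->
  comp c (game_name p) z = ifz c 2 (ifz (pred c) (num_outcomes p) (ifz (pred (pred c)) (turn_code p z) (pref_code z))).
Proof.
  intros Hc. unfold comp, game_name. rewrite unpair_fst_pair, unpair_snd_pair.
  destruct c as [|[|[|[|c]]]]; [reflexivity.. | lia].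
Qed.

Lemma comp_upper_game_name p a s : comp (4 + pair_nat a s) (game_name p) = upper_name p a s.
Proof.
  apply functional_extensionality. intros z. unfold comp, game_name. rewrite unpair_fst_pair, unpair_snd_pair.
  replace (4 + pair_nat a s - 4) with (pair_nat a s) by lia. cbn [Nat.add ifz pred]. rewrite unpair_fst_pair, unpair_snd_pair. reflexivity.
Qed.

Lemma pref_code_spec a o o' : pref_code (pair_nat a (pair_nat o o')) = ifz a (ltb_nat o o') (ltb_nat o' o).
Proof. unfold pref_code. rewrite !unpair_fst_pair, !unpair_snd_pair, unpair_fst_pair. reflexivity. Qed.

Lemma btail_upper_name p a s : btail (upper_name p a s) = level_name p (threshold p a s).
Proof. reflexivity. Qed.

Lemma game_name_names G1 p : subgames_ok G1 p ->
  names_game (union_class (closure_G2 G1) (co_class (closure_G2 G1))) (game_name p)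
    (claim_game (num_games p) (subgame_turn p) (subgame_win G1 p)).
Proof.
  intros Hok. unfold names_game, claim_game. cbn [gpl gout gturn gpref gval].
  rewrite !comp_game_name by lia. cbn [ifz pred]. fold (num_outcomes p).
  split; [reflexivity|]. split; [reflexivity|].
  split; [|split; [intros x; apply outcome_lt|]].
  { intros w. pose proof (claim_turn_le1 (num_games p) (subgame_turn p) w) as H.
    specialize (H (fun j u Hj => proj1 (Hok j Hj) u)). lia. }
  split; [intros w; rewrite comp_game_name by lia; apply turn_code_spec|].
  split.
  - intros a o o' Ha _ _. rewrite comp_game_name by lia. cbn [ifz pred]. rewrite pref_code_spec. unfold pref_ap, ltb_nat.
    destruct a as [|[|a]]; [| |lia]; cbn [ifz Nat.eqb];
      [destruct (Nat.ltb_spec o o') | destruct (Nat.ltb_spec o' o)]; split; intros; lia.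
  - intros a s Ha Hs Hu. rewrite comp_upper_game_name.
    assert (Hrn := level_name_rnames G1 p (threshold p a s) Hok).
    assert (Ht : threshold p a s <= 2 ^ num_games p + 2) by apply threshold_le.
    destruct a as [|[|a]]; [| |lia]; split; cbn [rdenot rnames union_class co_class upper_name ifz Nat.eqb];
      rewrite ?btail_upper_name; auto; try intros x; rewrite ?level_name_denotes by auto.
    + rewrite threshold_upper; [reflexivity | exact Hu | apply outcome_lt].
    + rewrite threshold_lower; [split; [apply Nat.nle_gt | apply Nat.lt_nge] | exact Hu | apply outcome_lt].
Qed.

(** * Decoding an equilibrium *)

Lemma bpair_even p q x : bpair p q (2 * x) = p x.
Proof.
  unfold bpair. rewrite Nat.even_mul, Nat.div2_double. reflexivity.
Qed.

Lemma bpair_odd p q x : bpair p q (2 * x + 1) = q x.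
Proof.
  unfold bpair. rewrite Nat.add_1_r, Nat.even_succ, Nat.odd_mul, Nat.div2_succ_double. reflexivity.
Qed.

Lemma comp0_bfst (r : baire) : comp 0 r = bfst r.
Proof. apply functional_extensionality. intros x. unfold comp, bfst, pair_nat. simpl. f_equal. lia. Qed.

Lemma comp_succ_bsnd j (r : baire) : comp (S j) r = comp j (bsnd r).
Proof.
  apply functional_extensionality. intros x. unfold comp, bsnd, pair_nat.
  pose proof (pow2_pos j). rewrite Nat.pow_succ_r by lia. f_equal. nia.
Qed.

Lemma power_problem_dom f n r : pdom (power_problem f n) r -> forall j, j < n -> pdom f (comp j r).
Proof.
  revert r; induction n; intros r Hr j Hj; [lia|]. destruct Hr as [H1 H2]. destruct j.
  - rewrite comp0_bfst. exact H1.
  - rewrite comp_succ_bsnd. apply IHn; auto. lia.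
Qed.

Lemma power_problem_sol f n r q :
  (forall j, j < n -> psol f (comp j r) (comp j q)) -> psol (power_problem f n) r q.
Proof.
  revert r q; induction n; intros r q H; simpl; auto. split.
  - rewrite <- !comp0_bfst. apply H. lia.
  - apply IHn. intros j Hj. rewrite <- !comp_succ_bsnd. apply H. lia.
Qed.

Lemma subgame_findws_instance p j : j < p 0 -> subgame p j = comp j (btail (bfst p)).
Proof.
  intros H. apply functional_extensionality. intros x. unfold subgame, subgame_name, comp, btail, bfst, ltb_nat.
  rewrite (proj2 (Nat.ltb_lt _ _) H). cbn [ifz]. f_equal. lia.
Qed.

Lemma subgame_win_instance p j : subgame p (p 0 + j) = comp j (btail (bsnd p)).
Proof.
  apply functional_extensionality. intros x. unfold subgame, subgame_name, comp, btail, bsnd, ltb_nat.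
  rewrite (proj2 (Nat.ltb_ge _ _)) by lia. cbn [ifz]. replace (p 0 + j - p 0) with j by lia. f_equal. lia.
Qed.

Lemma subgames_ok_of_dom (G1 : rpc) p :
  pdom (prod_problem (star_problem (FindWS G1)) (star_problem (Win G1))) p -> subgames_ok G1 p.
Proof.
  intros [H1 H2] j Hj. simpl in H1, H2. unfold num_games in Hj.
  destruct (Nat.lt_ge_cases j (p 0)).
  - rewrite subgame_findws_instance by auto. apply (power_problem_dom _ _ _ H1 j). exact H.
  - replace j with (p 0 + (j - p 0)) by lia. rewrite subgame_win_instance.
    apply (power_problem_dom _ _ _ H2 (j - p 0)). unfold bsnd. simpl. lia.
Qed.

Lemma decoded_claims_spec p q s n : names_profile q s -> decoded_claims (bpair p q) n = claims n (play s).
Proof.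
  intros Hq. induction n; [reflexivity|].
  change (decoded_claims (bpair p q) (S n))
    with (decoded_claims (bpair p q) n + 2 ^ n * bpair p q (2 * (2 ^ n - 1 + decoded_claims (bpair p q) n) + 1)).
  rewrite bpair_odd, IHn, <- wcode_bits_word by apply claims_lt. rewrite Hq, <- hist_eq_bits_word by lia.
  change (s (hist s n)) with (play s n). rewrite claims_succ. destruct (play s n); simpl; lia.
Qed.

Lemma output_name_even o y : output_name o (2 * y) =
  o (2 * (challenge_code (decoded_claims o (o 0 + o 2)) (o 0 + o 2) (unpair_fst y) +
          2 ^ (o 0 + o 2 + unpair_fst y + 1) * unpair_snd y) + 1).
Proof.
  unfold output_name. cbv zeta. rewrite Nat.div2_double, mod2_spec.
  replace (2 * y) with (y * 2) by lia. rewrite Nat.Div0.mod_mul. reflexivity.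
Qed.

Lemma output_name_odd o y : output_name o (2 * y + 1) = 1 - testbit_nat (decoded_claims o (o 0 + o 2)) (o 0 + unpair_fst y).
Proof.
  unfold output_name. cbv zeta.
  rewrite Nat.add_1_r, Nat.div2_succ_double, mod2_spec.
  replace (S (2 * y)) with (1 + y * 2) by lia. rewrite Nat.Div0.mod_add. reflexivity.
Qed.

Section Decoding.
Variables (G1 : rpc) (p q : baire) (s : profile).
Hypothesis p_dom : pdom (prod_problem (star_problem (FindWS G1)) (star_problem (Win G1))) p.
Hypothesis q_names : names_profile q s.
Hypothesis s_nash : nash (claim_game (num_games p) (subgame_turn p) (subgame_win G1 p)) s.

Let N := num_games p.
Let B := claims N (play s).
Let o := bpair p q.

Lemma decoded_num_games : o 0 + o 2 = N.
Proof. unfold o, N, num_games. rewrite <- (bpair_even p q 0), <- (bpair_even p q 1). reflexivity. Qed.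

Lemma decoded_claims_output : decoded_claims o (o 0 + o 2) = B.
Proof. rewrite decoded_num_games. apply decoded_claims_spec; auto. Qed.

Lemma subgame_turn_le1 j u : j < N -> subgame_turn p j u <= 1.
Proof. intros Hj. apply (subgames_ok_of_dom G1 p p_dom j Hj). Qed.

Lemma output_solves_findws : psol (star_problem (FindWS G1)) (bfst p) (bfst (output_name o)).
Proof.
  cbn [psol star_problem]. apply power_problem_sol. intros j Hj. unfold bfst in Hj. simpl in Hj.
  assert (HjN : j < N) by (unfold N, num_games; lia).
  rewrite <- subgame_findws_instance by auto.
  exists (fun u => s (challenge_word B N j ++ u)). split.
  - intros u. unfold comp at 1, bfst. rewrite output_name_even, unpair_fst_pair, unpair_snd_pair.
    rewrite decoded_claims_output, decoded_num_games. unfold o. rewrite bpair_odd, <- q_names.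
    rewrite wcode_app, length_challenge_word, wcode_challenge_word by apply claims_lt. reflexivity.
  - exists 0. split; [lia|]. apply (nash_claim_winning N _ _ subgame_turn_le1 s s_nash j HjN).
    apply (nash_claims_iff_has_ws N _ _ subgame_turn_le1 s s_nash j HjN).
    destruct p_dom as [H1 _]. destruct (power_problem_dom _ _ _ H1 j Hj) as [_ Hws].
    rewrite <- subgame_findws_instance in Hws by auto. exact Hws.
Qed.

Lemma output_solves_win : standing G1 -> psol (star_problem (Win G1)) (bsnd p) (bsnd (output_name o)).
Proof.
  intros [Hdet _]. cbn [psol star_problem]. apply power_problem_sol. intros j Hj. unfold bsnd in Hj. simpl in Hj.
  assert (HjN : p 0 + j < N) by (unfold N, num_games; lia).
  assert (Hout : comp j (bsnd (output_name o)) 0 = 1 - Nat.b2n (Nat.testbit B (p 0 + j))).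
  { unfold comp, bsnd. rewrite output_name_odd, unpair_fst_pair, decoded_claims_output, testbit_nat_spec.
    unfold o. rewrite <- (bpair_even p q 0). reflexivity. }
  rewrite <- subgame_win_instance. cbn [psol Win]. rewrite Hout.
  pose proof (nash_claims_iff_has_ws N _ _ subgame_turn_le1 s s_nash (p 0 + j) HjN) as Hiff. fold B in Hiff.
  destruct (Nat.testbit B (p 0 + j)) eqn:E; [left | right]; (split; [reflexivity|]).
  - apply Hiff. reflexivity.
  - destruct (subgames_ok_of_dom G1 p p_dom (p 0 + j) HjN) as [Hd Hn].
    destruct (Hdet _ Hn _ Hd) as [Hws | Hws]; auto. apply Hiff in Hws. congruence.
Qed.
End Decoding.

Theorem lemma27 (G1 : rpc) :
  standing G1 ->
  standing (union_class (closure_G2 G1) (co_class (closure_G2 G1))) ->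
  weihrauch_le
    (prod_problem (star_problem (FindWS G1)) (star_problem (Win G1)))
    (NEap (union_class (closure_G2 G1) (co_class (closure_G2 G1)))).
Proof.
  intros HG1 _. exists (proj1_sig computable_game_name), (proj1_sig computable_output_name).
  intros R HR p Hp.
  set (game := claim_game (num_games p) (subgame_turn p) (subgame_win G1 p)).
  assert (Hnames : names_game (union_class (closure_G2 G1) (co_class (closure_G2 G1))) (game_name p) game)
    by (apply game_name_names, subgames_ok_of_dom; auto).
  assert (Hdom : pdom (NEap (union_class (closure_G2 G1) (co_class (closure_G2 G1)))) (game_name p))
    by (exists game; split; [exact Hnames | apply ap_claim_game]).
  exists (game_name p). split; [intros n; exact (proj2_sig computable_game_name p [n])|]. split; [exact Hdom|].
  set (q := R (game_name p)).
  exists (output_name (bpair p q)). split; [intros n; exact (proj2_sig computable_output_name _ [n])|].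
  destruct (HR _ Hdom) as (s & Hq & Hnash).
  specialize (Hnash game Hnames (ap_claim_game _ _ _)).
  split; [apply (output_solves_findws G1 p q s) | apply (output_solves_win G1 p q s)]; auto.
Qed.
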